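(* Let $S^0$ be an adequate semigroup with semilattice of idempotents $E^0$. Let $L$ be a left adequate semigroup and $R$ a right adequate semigroup and suppose that $S^0$ is a common quasi-ideal adequate transversal of $L$ and $R$. For $x\in L$ write $x=e_x\overline{x}f_x$ and for $a\in R$ write $a=e_a\overline{a}f_a$ for the factorisations given by the transversal $S^0$ (so $\overline{x},\overline{a}\in S^0$, $e_x\in E(L)$, $f_x\in E^0$, $e_a\in E^0$, $f_a\in E(R)$). Let $R\times L\to S^0$ be a map denoted by $(a,x)\mapsto a\ast x$ and suppose that $\ast$ satisfies (1) for all $y,z\in L$, $a,b\in R$ with $\overline{y}=\overline{b}$, $(a\ast y)f_b\ast z = a\ast e_y(b\ast z)$; (2) if $a\in S^0$ or $x\in S^0$ then $a\ast x = ax$. Let $T = \{(x,a)\in L\times R : \overline{x} = \overline{a}\}$ and define $(x,a)(y,b)=(e_x(a\ast y),(a\ast y)f_b)$. Then $T$ is an abundant semigroup with a quasi-ideal adequate transversal $T^0=\{(s,s):s\in S^0\}$ with $T^0\cong S^0$. Moreover every abundant semigroup with a quasi-ideal adequate transversal can be constructed (up to isomorphism) in this way.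
   Context: A semigroup is abundant if every ${\cal R}^\ast$-class and every ${\cal L}^\ast$-class contains an idempotent; it is adequate if moreover its idempotents commute; it is left (resp. right) adequate if it is abundant and every ${\cal R}^\ast$-class (resp. ${\cal L}^\ast$-class) contains a unique idempotent. For $a$ in an adequate semigroup, $a^+$ and $a^\ast$ denote the unique idempotents in the ${\cal R}^\ast$- and ${\cal L}^\ast$-classes of $a$. An adequate $\ast$-subsemigroup $S^0$ of an abundant semigroup $S$ is an adequate transversal if each $x\in S$ has a unique $\overline{x}\in S^0$ and idempotents $e_x,f_x\in E(S)$ with $x=e_x\overline{x}f_x$, $e_x\,{\cal L}\,\overline{x}^+$, $f_x\,{\cal R}\,\overline{x}^\ast$ ($e_x,f_x$ are then uniquely determined). $S^0$ is a quasi-ideal if $S^0SS^0\subseteq S^0$. *)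

From Stdlib Require Import Logic.FunctionalExtensionality.

Record semigroup := Semigroup {
  carrier :> Type;
  sop : carrier -> carrier -> carrier;
  sassoc : forall x y z, sop x (sop y z) = sop (sop x y) z }.

Arguments sop {s} _ _.
Notation "x ⋅ y" := (sop x y) (at level 40, left associativity).

Section Defs.
Variable S : semigroup.

Definition idem (e : S) : Prop := e ⋅ e = e.

(* multiplication by an element of S^1 = S + {1}; None is the adjoined 1 *)
Definition lmul1 (u : option S) (a : S) : S :=
  match u with None => a | Some u => u ⋅ a end.
Definition rmul1 (a : S) (u : option S) : S :=
  match u with None => a | Some u => a ⋅ u end.

Definition RStar (a b : S) : Prop :=
  forall u v : option S, lmul1 u a = lmul1 v a <-> lmul1 u b = lmul1 v b.
Definition LStar (a b : S) : Prop :=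
  forall u v : option S, rmul1 a u = rmul1 a v <-> rmul1 b u = rmul1 b v.

Definition GreenL (a b : S) : Prop :=
  (exists u, a = lmul1 u b) /\ (exists v, b = lmul1 v a).
Definition GreenR (a b : S) : Prop :=
  (exists u, a = rmul1 b u) /\ (exists v, b = rmul1 a v).

Definition abundant : Prop :=
  forall a : S, (exists e, idem e /\ RStar a e) /\ (exists f, idem f /\ LStar a f).
Definition adequate : Prop :=
  abundant /\ forall e f, idem e -> idem f -> e ⋅ f = f ⋅ e.
Definition left_adequate : Prop :=
  abundant /\ forall a e f, idem e -> idem f -> RStar a e -> RStar a f -> e = f.
Definition right_adequate : Prop :=
  abundant /\ forall a e f, idem e -> idem f -> LStar a e -> LStar a f -> e = f.

Definition is_plus (a p : S) : Prop := idem p /\ RStar a p.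
Definition is_star (a q : S) : Prop := idem q /\ LStar a q.
End Defs.

Arguments idem {S}. Arguments RStar {S}. Arguments LStar {S}.
Arguments GreenL {S}. Arguments GreenR {S}.
Arguments is_plus {S}. Arguments is_star {S}.

(* A subsemigroup S0 of S is represented by an injective homomorphism j : S0 -> S *)
Section Sub.
Variables (S0 S : semigroup) (j : S0 -> S).

Definition hom : Prop := forall s t, j (s ⋅ t) = j s ⋅ j t.
Definition injective : Prop := forall s t, j s = j t -> s = t.

Definition star_subsemigroup : Prop :=
  forall s : S0, (exists e, idem e /\ RStar (j s) (j e))
              /\ (exists f, idem f /\ LStar (j s) (j f)).

Definition factors_through (x : S) (s : S0) (e f : S) : Prop :=
  idem e /\ idem f /\ x = e ⋅ j s ⋅ f /\
  (exists p, is_plus s p /\ GreenL e (j p)) /\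
  (exists q, is_star s q /\ GreenR f (j q)).

Definition adequate_transversal : Prop :=
  hom /\ injective /\ adequate S0 /\ star_subsemigroup /\
  forall x : S, exists! s : S0, exists e f : S, factors_through x s e f.

Definition quasi_ideal : Prop :=
  forall (s t : S0) (x : S), exists u : S0, j s ⋅ x ⋅ j t = j u.

Definition factorisation (bar : S -> S0) (e f : S -> S) : Prop :=
  forall x, factors_through x (bar x) (e x) (f x).
End Sub.

Arguments hom {S0 S}. Arguments injective {S0 S}.
Arguments adequate_transversal {S0 S}. Arguments quasi_ideal {S0 S}.
Arguments factorisation {S0 S}.

Definition iso_onto (S : semigroup) (A : Type) (P : A -> Prop)
  (m : A -> A -> A) (phi : S -> A) : Prop :=
  (forall u v, phi u = phi v -> u = v) /\ (forall u, P (phi u)) /\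
  (forall p, P p -> exists u, phi u = p) /\
  (forall u v, phi (u ⋅ v) = m (phi u) (phi v)).

Section Construction.
Variables (S0 L R : semigroup) (iL : S0 -> L) (iR : S0 -> R)
  (barL : L -> S0) (eL fL : L -> L) (barR : R -> S0) (eR fR : R -> R)
  (st : R -> L -> S0).

(* conditions (1) and (2) on the map (a, x) |-> a * x = st a x *)
Definition star_axioms : Prop :=
  (forall (y z : L) (a b : R), barL y = barR b ->
     st (iR (st a y) ⋅ fR b) z = st a (eL y ⋅ iL (st b z))) /\
  (forall (s : S0) (x : L), iL (st (iR s) x) = iL s ⋅ x) /\
  (forall (a : R) (t : S0), iR (st a (iL t)) = a ⋅ iR t).

Definition construction_setting : Prop :=
  adequate S0 /\ left_adequate L /\ right_adequate R /\
  adequate_transversal iL /\ quasi_ideal iL /\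
  adequate_transversal iR /\ quasi_ideal iR /\
  factorisation iL barL eL fL /\ factorisation iR barR eR fR /\
  star_axioms.

Definition inT (p : L * R) : Prop := barL (fst p) = barR (snd p).
Definition tmul (p q : L * R) : L * R :=
  (eL (fst p) ⋅ iL (st (snd p) (fst q)), iR (st (snd p) (fst q)) ⋅ fR (snd q)).
End Construction.
Arguments iso_onto S {A}.

From Stdlib Require Import ClassicalEpsilon ProofIrrelevance.

(* In T the product (x,a)(y,b) has middle part a * y, and two
   instances of condition (1) give a * y = abar (f_a * y) and
   a * y = (a * y) ybar^*.  So (a * y)^+ <= xbar^+ and (a * y)^* <= ybar^*,
   whence e_x (a * y) and (a * y) f_b both factor with middle part a * y: T is
   closed under the product, and its associativity is condition (1) itself.
   The element (x, a) is R*-related to (e_x, xbar^+) and L*-related to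
   (xbar^*, f_a), and {(s, s)} is a quasi-ideal adequate transversal.
   Conversely, given S with transversal S0, take L = {x | f_x = xbar^*},
   R = {a | e_a = abar^+} and a * x = a x, which lies in S0 because S0 is a
   quasi-ideal; then x |-> (e_x xbar, xbar f_x) is an isomorphism of S onto T. *)

Ltac reassoc := repeat rewrite sassoc.

Section Reassociation.
Variable S : semigroup.

Lemma mul_rewrite2 (x y z w : S) : y ⋅ z = w -> x ⋅ y ⋅ z = x ⋅ w.
Proof. intros H; rewrite <- sassoc, H; reflexivity. Qed.
Lemma mul_rewrite3 (x a b c w : S) : a ⋅ b ⋅ c = w -> x ⋅ a ⋅ b ⋅ c = x ⋅ w.
Proof. intros H; rewrite <- H; reassoc; reflexivity. Qed.
Lemma mul_rewrite4 (x a b c d w : S) :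
  a ⋅ b ⋅ c ⋅ d = w -> x ⋅ a ⋅ b ⋅ c ⋅ d = x ⋅ w.
Proof. intros H; rewrite <- H; reassoc; reflexivity. Qed.
End Reassociation.

(* Rewrite with [H : u1 ⋅ ... ⋅ uk = w] (k <= 4) anywhere inside a product. *)
Ltac rewrite_assoc H := reassoc;
  first [ rewrite H | rewrite (mul_rewrite2 _ _ _ _ _ H)
        | rewrite (mul_rewrite3 _ _ _ _ _ _ H) | rewrite (mul_rewrite4 _ _ _ _ _ _ _ H) ];
  reassoc.

Lemma sig_eq {A} {P : A -> Prop} (u v : {x : A | P x}) : proj1_sig u = proj1_sig v -> u = v.
Proof. destruct u, v; simpl; intros ->; f_equal; apply proof_irrelevance. Qed.

Section StarRelations.
Variable S : semigroup.

Lemma lmul1_assoc u (a b : S) : lmul1 S u (a ⋅ b) = lmul1 S u a ⋅ b.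
Proof. destruct u; simpl; auto using sassoc. Qed.
Lemma rmul1_assoc u (a b : S) : rmul1 S (a ⋅ b) u = a ⋅ rmul1 S b u.
Proof. destruct u; simpl; auto. symmetry; apply sassoc. Qed.

Lemma RStar_refl (a:S) : RStar a a. Proof. intros u v; tauto. Qed.
Lemma RStar_sym (a b:S) : RStar a b -> RStar b a.
Proof. intros H u v; specialize (H u v); tauto. Qed.
Lemma RStar_trans (a b c:S) : RStar a b -> RStar b c -> RStar a c.
Proof. intros H1 H2 u v; specialize (H1 u v); specialize (H2 u v); tauto. Qed.
Lemma LStar_refl (a:S) : LStar a a. Proof. intros u v; tauto. Qed.
Lemma LStar_sym (a b:S) : LStar a b -> LStar b a.
Proof. intros H u v; specialize (H u v); tauto. Qed.
Lemma LStar_trans (a b c:S) : LStar a b -> LStar b c -> LStar a c.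
Proof. intros H1 H2 u v; specialize (H1 u v); specialize (H2 u v); tauto. Qed.

Lemma RStar_cancel (a p u v : S) : RStar a p -> u ⋅ a = v ⋅ a -> u ⋅ p = v ⋅ p.
Proof. intros H E. exact (proj1 (H (Some u) (Some v)) E). Qed.
Lemma RStar_cancel_id (a p v : S) : RStar a p -> a = v ⋅ a -> p = v ⋅ p.
Proof. intros H E. exact (proj1 (H None (Some v)) E). Qed.
Lemma RStar_idem_mul (a p : S) : idem p -> RStar a p -> p ⋅ a = a.
Proof. intros Hp H. exact (proj2 (H (Some p) None) Hp). Qed.
Lemma LStar_cancel (a q u v : S) : LStar a q -> a ⋅ u = a ⋅ v -> q ⋅ u = q ⋅ v.
Proof. intros H E. exact (proj1 (H (Some u) (Some v)) E). Qed.
Lemma LStar_cancel_id (a q v : S) : LStar a q -> a = a ⋅ v -> q = q ⋅ v.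
Proof. intros H E. exact (proj1 (H None (Some v)) E). Qed.
Lemma LStar_idem_mul (a q : S) : idem q -> LStar a q -> a ⋅ q = a.
Proof. intros Hq H. exact (proj2 (H (Some q) None) Hq). Qed.

Lemma GreenL_idem_eqs (e p : S) : idem e -> idem p -> GreenL e p -> e ⋅ p = e /\ p ⋅ e = p.
Proof.
  unfold idem; intros He Hp [[u Hu] [v Hv]]; split.
  - destruct u as [u|]; simpl in Hu; rewrite Hu; [rewrite <- sassoc, Hp|]; auto.
  - destruct v as [v|]; simpl in Hv; rewrite Hv; [rewrite <- sassoc, He|]; auto.
Qed.
Lemma GreenL_of_eqs (e p : S) : e ⋅ p = e -> p ⋅ e = p -> GreenL e p.
Proof. intros H1 H2; split; [exists (Some e) | exists (Some p)]; simpl; auto. Qed.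
Lemma GreenR_idem_eqs (f q : S) : idem f -> idem q -> GreenR f q -> q ⋅ f = f /\ f ⋅ q = q.
Proof.
  unfold idem; intros Hf Hq [[u Hu] [v Hv]]; split.
  - destruct u as [u|]; simpl in Hu; rewrite Hu; [rewrite sassoc, Hq|]; auto.
  - destruct v as [v|]; simpl in Hv; rewrite Hv; [rewrite sassoc, Hf|]; auto.
Qed.
Lemma GreenR_of_eqs (f q : S) : q ⋅ f = f -> f ⋅ q = q -> GreenR f q.
Proof. intros H1 H2; split; [exists (Some f) | exists (Some q)]; simpl; auto. Qed.

Lemma GreenR_RStar (a b u v : S) : a = b ⋅ u -> b = a ⋅ v -> RStar a b.
Proof.
  intros H1 H2 x y; split; intro E.
  - rewrite H2, !lmul1_assoc, E; reflexivity.
  - rewrite H1, !lmul1_assoc, E; reflexivity.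
Qed.
Lemma GreenL_LStar (a b u v : S) : a = u ⋅ b -> b = v ⋅ a -> LStar a b.
Proof.
  intros H1 H2 x y; split; intro E.
  - rewrite H2, !rmul1_assoc, E; reflexivity.
  - rewrite H1, !rmul1_assoc, E; reflexivity.
Qed.
Lemma RStar_of_absorb (g h : S) : g ⋅ h = h -> h ⋅ g = g -> RStar g h.
Proof. intros H1 H2; apply (GreenR_RStar g h g h); symmetry; assumption. Qed.
Lemma LStar_of_absorb (g h : S) : g ⋅ h = g -> h ⋅ g = h -> LStar g h.
Proof. intros H1 H2; apply (GreenL_LStar g h g h); symmetry; assumption. Qed.
End StarRelations.

(* a^+ and a^*; when S0 is not abundant these are arbitrary elements. *)
Definition aplus (S0 : semigroup) (s : S0) : S0 :=
  epsilon (inhabits s) (fun p => idem p /\ RStar s p).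
Definition astar (S0 : semigroup) (s : S0) : S0 :=
  epsilon (inhabits s) (fun p => idem p /\ LStar s p).
Arguments aplus {S0}. Arguments astar {S0}.

Section Adequate.
Variable S0 : semigroup.
Hypothesis HA : adequate S0.

Lemma idem_comm (e f : S0) : idem e -> idem f -> e ⋅ f = f ⋅ e.
Proof. apply (proj2 HA). Qed.
Lemma aplus_spec (s : S0) : idem (aplus s) /\ RStar s (aplus s).
Proof. unfold aplus, astar; apply epsilon_spec. exact (proj1 (proj1 HA s)). Qed.
Lemma astar_spec (s : S0) : idem (astar s) /\ LStar s (astar s).
Proof. unfold aplus, astar; apply epsilon_spec. exact (proj2 (proj1 HA s)). Qed.
Lemma aplus_idem (s:S0) : idem (aplus s). Proof. apply aplus_spec. Qed.
Lemma astar_idem (s:S0) : idem (astar s). Proof. apply astar_spec. Qed.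
Lemma RStar_idem_unique (s p p' : S0) : idem p -> idem p' -> RStar s p -> RStar s p' -> p = p'.
Proof.
  intros Hp Hp' H H'.
  assert (H1 : RStar p p') by (eapply RStar_trans; [apply RStar_sym, H|exact H']).
  assert (E1 : p ⋅ p' = p') by (apply RStar_idem_mul; [exact Hp| apply RStar_sym, H1]).
  assert (E2 : p' ⋅ p = p) by (apply RStar_idem_mul; [exact Hp'| exact H1]).
  rewrite <- E2, idem_comm, E1; auto.
Qed.
Lemma LStar_idem_unique (s p p' : S0) : idem p -> idem p' -> LStar s p -> LStar s p' -> p = p'.
Proof.
  intros Hp Hp' H H'.
  assert (H1 : LStar p p') by (eapply LStar_trans; [apply LStar_sym, H|exact H']).
  assert (E1 : p ⋅ p' = p) by (apply LStar_idem_mul; [exact Hp'| exact H1]).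
  assert (E2 : p' ⋅ p = p') by (apply LStar_idem_mul; [exact Hp| apply LStar_sym, H1]).
  rewrite <- E1, idem_comm, E2; auto.
Qed.
Lemma aplus_unique (s p : S0) : idem p -> RStar s p -> aplus s = p.
Proof. intros; eapply RStar_idem_unique; eauto; apply aplus_spec. Qed.
Lemma astar_unique (s p : S0) : idem p -> LStar s p -> astar s = p.
Proof. intros; eapply LStar_idem_unique; eauto; apply astar_spec. Qed.
Lemma aplus_of_idem (p : S0) : idem p -> aplus p = p.
Proof. intros; apply aplus_unique; auto using RStar_refl. Qed.
Lemma astar_of_idem (p : S0) : idem p -> astar p = p.
Proof. intros; apply astar_unique; auto using LStar_refl. Qed.
Lemma aplus_mul (s : S0) : aplus s ⋅ s = s.
Proof. apply RStar_idem_mul; apply aplus_spec. Qed.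
Lemma mul_astar (s : S0) : s ⋅ astar s = s.
Proof. apply LStar_idem_mul; apply astar_spec. Qed.
Lemma aplus_absorb (s u : S0) : u ⋅ s = s -> u ⋅ aplus s = aplus s.
Proof. intros H; symmetry; apply (RStar_cancel_id _ s); [apply aplus_spec| auto]. Qed.
Lemma astar_absorb (s u : S0) : s ⋅ u = s -> astar s ⋅ u = astar s.
Proof. intros H; symmetry; apply (LStar_cancel_id _ s); [apply astar_spec| auto]. Qed.
Lemma aplus_cancel (s u v : S0) : u ⋅ s = v ⋅ s -> u ⋅ aplus s = v ⋅ aplus s.
Proof. intros; eapply RStar_cancel; [apply aplus_spec|eauto]. Qed.
Lemma astar_cancel (s u v : S0) : s ⋅ u = s ⋅ v -> astar s ⋅ u = astar s ⋅ v.
Proof. intros; eapply LStar_cancel; [apply astar_spec|eauto]. Qed.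
End Adequate.

Section Transversal.
Variables (S0 S : semigroup) (j : S0 -> S) (bar : S -> S0) (e f : S -> S).
Hypotheses (Hhom : hom j) (Hinj : injective j) (HA : adequate S0)
  (Hstar : star_subsemigroup S0 S j)
  (Huniq : forall x : S, exists! s : S0, exists e f : S, factors_through S0 S j x s e f)
  (Hfac : factorisation j bar e f).

Lemma image_lmul1 u s : j (lmul1 S0 u s) = lmul1 S (option_map j u) (j s).
Proof. destruct u; simpl; auto. Qed.
Lemma image_rmul1 u s : j (rmul1 S0 s u) = rmul1 S (j s) (option_map j u).
Proof. destruct u; simpl; auto. Qed.
Lemma RStar_of_image s p : RStar (j s) (j p) -> RStar s p.
Proof.
  intros H u v. specialize (H (option_map j u) (option_map j v)).
  rewrite <- !image_lmul1 in H. split; intro E.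
  - apply Hinj, H; rewrite E; reflexivity.
  - apply Hinj, H; rewrite E; reflexivity.
Qed.
Lemma LStar_of_image s p : LStar (j s) (j p) -> LStar s p.
Proof.
  intros H u v. specialize (H (option_map j u) (option_map j v)).
  rewrite <- !image_rmul1 in H. split; intro E.
  - apply Hinj, H; rewrite E; reflexivity.
  - apply Hinj, H; rewrite E; reflexivity.
Qed.
Lemma image_idem p : idem p -> idem (j p).
Proof. unfold idem; intros H; rewrite <- Hhom, H; auto. Qed.
Lemma RStar_image_aplus s : RStar (j s) (j (aplus s)).
Proof.
  destruct (proj1 (Hstar s)) as [p [Hp H]].
  rewrite (aplus_unique _ HA s p); auto. apply RStar_of_image; auto.
Qed.
Lemma LStar_image_astar s : LStar (j s) (j (astar s)).
Proof.
  destruct (proj2 (Hstar s)) as [p [Hp H]].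
  rewrite (astar_unique _ HA s p); auto. apply LStar_of_image; auto.
Qed.

Lemma factor_eq x : x = e x ⋅ j (bar x) ⋅ f x.
Proof. apply (Hfac x). Qed.
Lemma factor_e x : idem (e x) /\ e x ⋅ j (aplus (bar x)) = e x /\
    j (aplus (bar x)) ⋅ e x = j (aplus (bar x)).
Proof.
  destruct (Hfac x) as (He & Hf & Hx & [p [[Hp HR] HG]] & _).
  rewrite (aplus_unique _ HA _ p); auto. split; auto. apply GreenL_idem_eqs; auto using image_idem.
Qed.
Lemma factor_f x : idem (f x) /\ j (astar (bar x)) ⋅ f x = f x /\
    f x ⋅ j (astar (bar x)) = j (astar (bar x)).
Proof.
  destruct (Hfac x) as (He & Hf & Hx & _ & [p [[Hp HR] HG]]).
  rewrite (astar_unique _ HA _ p); auto. split; auto. apply GreenR_idem_eqs; auto using image_idem.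
Qed.

Lemma factor_bar_unique x u e' f' : factors_through S0 S j x u e' f' -> bar x = u.
Proof.
  intros F. destruct (Huniq x) as [s [Hs Hu]].
  rewrite <- (Hu (bar x)), <- (Hu u); eauto.
Qed.

Lemma factor_of_eqs x u e' f' :
  idem e' -> idem f' -> e' ⋅ j (aplus u) = e' -> j (aplus u) ⋅ e' = j (aplus u) ->
  j (astar u) ⋅ f' = f' -> f' ⋅ j (astar u) = j (astar u) -> x = e' ⋅ j u ⋅ f' ->
  bar x = u /\ e x = e' /\ f x = f'.
Proof.
  intros He Hf E1 E2 F1 F2 Hx.
  assert (Hb : bar x = u).
  { apply (factor_bar_unique x u e' f'). repeat split; auto.
    - exists (aplus u); split; [apply aplus_spec; auto| apply GreenL_of_eqs; auto].
    - exists (astar u); split; [apply astar_spec; auto| apply GreenR_of_eqs; auto]. }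
  destruct (factor_e x) as (He2 & E3 & E4). destruct (factor_f x) as (Hf2 & F3 & F4).
  rewrite Hb in *. split; auto.
  assert (X1 : x ⋅ j (astar u) = e' ⋅ j u).
  { rewrite Hx. rewrite_assoc F2. rewrite_assoc (eq_sym (Hhom u (astar u))).
    rewrite mul_astar; auto. }
  assert (X2 : x ⋅ j (astar u) = e x ⋅ j u).
  { transitivity ((e x ⋅ j (bar x) ⋅ f x) ⋅ j (astar u)); [f_equal; apply factor_eq|].
    rewrite Hb. rewrite_assoc F4. rewrite_assoc (eq_sym (Hhom u (astar u))).
    rewrite mul_astar; auto. }
  assert (X3 : j (aplus u) ⋅ x = j u ⋅ f').
  { rewrite Hx. reassoc. rewrite E2. rewrite <- Hhom, aplus_mul; auto. }
  assert (X4 : j (aplus u) ⋅ x = j u ⋅ f x).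
  { transitivity (j (aplus u) ⋅ (e x ⋅ j (bar x) ⋅ f x)); [f_equal; apply factor_eq|].
    rewrite Hb. reassoc. rewrite E4. rewrite <- Hhom, aplus_mul; auto. }
  split.
  - rewrite <- E3, <- E1. apply (RStar_cancel _ (j u)); [apply RStar_image_aplus|]. congruence.
  - rewrite <- F3, <- F1. apply (LStar_cancel _ (j u)); [apply LStar_image_astar|]. congruence.
Qed.

Lemma image_aplus_idem s : idem (j (aplus s)). Proof. apply image_idem, aplus_idem; auto. Qed.
Lemma image_astar_idem s : idem (j (astar s)). Proof. apply image_idem, astar_idem; auto. Qed.
Lemma image_aplus_mul s : j (aplus s) ⋅ j s = j s. Proof. rewrite <- Hhom, aplus_mul; auto. Qed.
Lemma image_mul_astar s : j s ⋅ j (astar s) = j s. Proof. rewrite <- Hhom, mul_astar; auto. Qed.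

Lemma factor_sandwich u p q e' f' :
  idem p -> idem q -> idem e' -> idem f' ->
  e' ⋅ j p = e' -> j p ⋅ e' = j p -> j q ⋅ f' = f' -> f' ⋅ j q = j q ->
  p ⋅ u = u -> u ⋅ q = u ->
  bar (e' ⋅ j u ⋅ f') = u /\ e (e' ⋅ j u ⋅ f') = e' ⋅ j (aplus u) /\
  f (e' ⋅ j u ⋅ f') = j (astar u) ⋅ f'.
Proof.
  intros Hp Hq He Hf E1 E2 F1 F2 Pu Uq.
  assert (P1 : p ⋅ aplus u = aplus u) by (apply aplus_absorb; auto).
  assert (P2 : aplus u ⋅ p = aplus u) by (rewrite <- (idem_comm _ HA); auto using aplus_idem).
  assert (Q1 : astar u ⋅ q = astar u) by (apply astar_absorb; auto).
  assert (Q2 : q ⋅ astar u = astar u) by (rewrite (idem_comm _ HA); auto using astar_idem).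
  assert (J1 : j (aplus u) ⋅ e' = j (aplus u)).
  { rewrite <- P2, Hhom. reassoc. rewrite_assoc E2. rewrite <- Hhom; auto. }
  assert (J2 : f' ⋅ j (astar u) = j (astar u)).
  { rewrite <- Q2, Hhom. reassoc. rewrite F2. rewrite <- Hhom; auto. }
  pose proof (image_aplus_idem u) as I1. pose proof (image_astar_idem u) as I2.
  unfold idem in I1, I2.
  apply factor_of_eqs.
  - unfold idem. rewrite_assoc J1. rewrite_assoc I1. reflexivity.
  - unfold idem. rewrite_assoc J2. rewrite_assoc I2. reflexivity.
  - rewrite_assoc I1. reflexivity.
  - rewrite_assoc J1. apply I1.
  - rewrite_assoc I2. reflexivity.
  - rewrite_assoc J2. apply I2.
  - rewrite_assoc (image_aplus_mul u). rewrite_assoc (image_mul_astar u). reflexivity.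
Qed.

Lemma factor_image s : bar (j s) = s /\ e (j s) = j (aplus s) /\ f (j s) = j (astar s).
Proof.
  pose proof (image_aplus_idem s) as I1. pose proof (image_astar_idem s) as I2.
  unfold idem in I1, I2.
  destruct (factor_sandwich s (aplus s) (astar s) (j (aplus s)) (j (astar s))) as (A1 & A2 & A3);
   auto using aplus_idem, astar_idem, image_aplus_idem, image_astar_idem, aplus_mul, mul_astar.
  assert (E : j (aplus s) ⋅ j s ⋅ j (astar s) = j s)
    by (rewrite image_aplus_mul, image_mul_astar; auto).
  rewrite E in A1, A2, A3. rewrite I1 in A2. rewrite I2 in A3. auto.
Qed.

Lemma factor_left u p e' :
  idem p -> idem e' -> e' ⋅ j p = e' -> j p ⋅ e' = j p -> p ⋅ u = u ->
  bar (e' ⋅ j u) = u /\ e (e' ⋅ j u) = e' ⋅ j (aplus u) /\ f (e' ⋅ j u) = j (astar u).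
Proof.
  intros. pose proof (image_astar_idem u) as I2. unfold idem in I2.
  destruct (factor_sandwich u p (astar u) e' (j (astar u))) as (A1 & A2 & A3);
   auto using astar_idem, image_astar_idem, mul_astar.
  rewrite <- sassoc, image_mul_astar in *. rewrite I2 in A3. auto.
Qed.

Lemma factor_right u q f' :
  idem q -> idem f' -> j q ⋅ f' = f' -> f' ⋅ j q = j q -> u ⋅ q = u ->
  bar (j u ⋅ f') = u /\ e (j u ⋅ f') = j (aplus u) /\ f (j u ⋅ f') = j (astar u) ⋅ f'.
Proof.
  intros. pose proof (image_aplus_idem u) as I1. unfold idem in I1.
  destruct (factor_sandwich u (aplus u) q (j (aplus u)) f') as (A1 & A2 & A3);
   auto using aplus_idem, image_aplus_idem, aplus_mul.
  rewrite image_aplus_mul in *. rewrite I1 in A2. auto.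
Qed.
End Transversal.

Section Construction.
Variables (S0 L R : semigroup) (iL : S0 -> L) (iR : S0 -> R)
  (barL : L -> S0) (eL fL : L -> L) (barR : R -> S0) (eR fR : R -> R)
  (st : R -> L -> S0).
Hypotheses (HA : adequate S0) (HLad : left_adequate L) (HRad : right_adequate R)
  (Lhom : hom iL) (Linj : injective iL) (Lstar : star_subsemigroup S0 L iL)
  (Luniq : forall x : L, exists! s : S0, exists e f : L, factors_through S0 L iL x s e f)
  (HQL : quasi_ideal iL)
  (Rhom : hom iR) (Rinj : injective iR) (Rstar : star_subsemigroup S0 R iR)
  (Runiq : forall x : R, exists! s : S0, exists e f : R, factors_through S0 R iR x s e f)
  (HQR : quasi_ideal iR)
  (HfL : factorisation iL barL eL fL) (HfR : factorisation iR barR eR fR)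
  (star1 : forall (y z : L) (a b : R), barL y = barR b ->
     st (iR (st a y) ⋅ fR b) z = st a (eL y ⋅ iL (st b z)))
  (star2l : forall (s : S0) (x : L), iL (st (iR s) x) = iL s ⋅ x)
  (star2r : forall (a : R) (t : S0), iR (st a (iL t)) = a ⋅ iR t).

Let aplusI := aplus_idem S0 HA. Let astarI := astar_idem S0 HA.
Let L_RStar_aplus := RStar_image_aplus S0 L iL Lhom Linj HA Lstar.
Let R_LStar_astar := LStar_image_astar S0 R iR Rhom Rinj HA Rstar.
Let L_factor_e := factor_e S0 L iL barL eL fL Lhom HA HfL.
Let L_factor_f := factor_f S0 L iL barL eL fL Lhom HA HfL.
Let L_factor_eq := factor_eq S0 L iL barL eL fL HfL.
Let R_factor_e := factor_e S0 R iR barR eR fR Rhom HA HfR.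
Let R_factor_f := factor_f S0 R iR barR eR fR Rhom HA HfR.
Let R_factor_eq := factor_eq S0 R iR barR eR fR HfR.
Let L_factor_image := factor_image S0 L iL barL eL fL Lhom Linj HA Lstar Luniq HfL.
Let R_factor_image := factor_image S0 R iR barR eR fR Rhom Rinj HA Rstar Runiq HfR.
Let L_factor_left := factor_left S0 L iL barL eL fL Lhom Linj HA Lstar Luniq HfL.
Let R_factor_right := factor_right S0 R iR barR eR fR Rhom Rinj HA Rstar Runiq HfR.

Lemma fL_astar x : fL x = iL (astar (barL x)).
Proof.
  destruct (L_factor_f x) as (I & E1 & E2).
  apply (proj2 HLad (fL x)); auto using RStar_refl, image_idem.
  apply RStar_of_absorb; auto.
Qed.
Lemma L_decomp x : x = eL x ⋅ iL (barL x).
Proof.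
  rewrite (L_factor_eq x) at 1. rewrite fL_astar, <- sassoc, <- Lhom, mul_astar; auto.
Qed.
Lemma eR_aplus a : eR a = iR (aplus (barR a)).
Proof.
  destruct (R_factor_e a) as (I & E1 & E2).
  apply (proj2 HRad (eR a)); auto using LStar_refl, image_idem.
  apply LStar_of_absorb; auto.
Qed.
Lemma R_decomp a : a = iR (barR a) ⋅ fR a.
Proof.
  rewrite (R_factor_eq a) at 1. rewrite eR_aplus, <- Rhom, aplus_mul; auto.
Qed.

Lemma st_S0 s t : st (iR s) (iL t) = s ⋅ t.
Proof. apply Linj. rewrite star2l, Lhom; auto. Qed.

Lemma fR_factor a : barR (fR a) = astar (barR a) /\ fR (fR a) = fR a.
Proof.
  destruct (R_factor_f a) as (I & E1 & E2).
  destruct (R_factor_right (astar (barR a)) (astar (barR a)) (fR a)) as (A1 & A2 & A3); auto.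
  all: try apply astarI.
  rewrite E1 in A1, A2, A3. rewrite A3, (astar_of_idem _ HA _ (astarI _)), E1; auto.
Qed.

(* Condition (1) at (y, a, b) = (abar^*, abar, f_a), resp. at (z, b) = (ybar^*, ybar). *)
Lemma st_barR a z : st a z = barR a ⋅ st (fR a) z.
Proof.
  set (q := astar (barR a)).
  assert (Hq : idem q) by apply astarI.
  destruct (L_factor_image q) as (B1 & B2 & _).
  destruct (fR_factor a) as (F1 & F2).
  pose proof (star1 (iL q) z (iR (barR a)) (fR a)) as H.
  rewrite B1, F1, F2, B2, (aplus_of_idem _ HA q Hq), st_S0 in H.
  specialize (H eq_refl). unfold q in H at 1. rewrite mul_astar, <- R_decomp in H; auto.
  rewrite H, <- Lhom, st_S0, sassoc. unfold q; rewrite mul_astar; auto.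
Qed.
Lemma aplus_barR_st a z : aplus (barR a) ⋅ st a z = st a z.
Proof. rewrite st_barR, sassoc, aplus_mul; auto. Qed.

Lemma st_astar_barL a y : st a y = st a y ⋅ astar (barL y).
Proof.
  set (t := barL y).
  destruct (R_factor_image t) as (B1 & _ & B3).
  pose proof (star1 y (iL (astar t)) a (iR t)) as H.
  rewrite B1, B3, <- Rhom, st_S0, st_S0, <- sassoc, (astar_idem _ HA t), mul_astar in H; auto.
  rewrite H by reflexivity. f_equal. apply L_decomp.
Qed.

Lemma factor_eL_mul x s : aplus (barL x) ⋅ s = s ->
  barL (eL x ⋅ iL s) = s /\ eL (eL x ⋅ iL s) = eL x ⋅ iL (aplus s).
Proof.
  intros H. destruct (L_factor_e x) as (I & E1 & E2).
  destruct (L_factor_left s (aplus (barL x)) (eL x)) as (A1 & A2 & A3); auto.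
Qed.
Lemma factor_mul_fR b s : s ⋅ astar (barR b) = s ->
  barR (iR s ⋅ fR b) = s /\ fR (iR s ⋅ fR b) = iR (astar s) ⋅ fR b.
Proof.
  intros H. destruct (R_factor_f b) as (I & E1 & E2).
  destruct (R_factor_right s (astar (barR b)) (fR b)) as (A1 & A2 & A3); auto.
Qed.

Lemma tmul_closed p q : inT S0 L R barL barR p -> inT S0 L R barL barR q ->
  inT S0 L R barL barR (tmul S0 L R iL iR eL fR st p q).
Proof.
  destruct p as [x a], q as [y b]; unfold inT, tmul; simpl. intros Hp Hq.
  destruct (factor_eL_mul x (st a y)) as [A1 _]. { rewrite Hp; apply aplus_barR_st. }
  destruct (factor_mul_fR b (st a y)) as [A2 _]. { rewrite <- Hq; symmetry; apply st_astar_barL. }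
  congruence.
Qed.

Lemma tmul_assoc P Q W : inT S0 L R barL barR P -> inT S0 L R barL barR Q ->
    inT S0 L R barL barR W ->
  tmul S0 L R iL iR eL fR st P (tmul S0 L R iL iR eL fR st Q W) =
  tmul S0 L R iL iR eL fR st (tmul S0 L R iL iR eL fR st P Q) W.
Proof.
  destruct P as [x a], Q as [y b], W as [z c]; unfold inT, tmul; simpl. intros Hp Hq Hw.
  destruct (factor_eL_mul x (st a y)) as [A1 A2]. { rewrite Hp; apply aplus_barR_st. }
  destruct (factor_mul_fR b (st a y)) as [A3 A4]. { rewrite <- Hq; symmetry; apply st_astar_barL. }
  destruct (factor_eL_mul y (st b z)) as [B1 B2]. { rewrite Hq; apply aplus_barR_st. }
  destruct (factor_mul_fR c (st b z)) as [B3 B4]. { rewrite <- Hw; symmetry; apply st_astar_barL. }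
  rewrite A2, B4.
  assert (W1 : aplus (st a y) ⋅ st (iR (st a y) ⋅ fR b) z = st (iR (st a y) ⋅ fR b) z).
  { rewrite <- A3 at 1. apply aplus_barR_st. }
  assert (W2 : st a (eL y ⋅ iL (st b z)) ⋅ astar (st b z) = st a (eL y ⋅ iL (st b z))).
  { rewrite <- B1 at 2. symmetry; apply st_astar_barL. }
  rewrite <- sassoc, <- Lhom, W1, star1; auto.
  rewrite sassoc, <- Rhom, W2. reflexivity.
Qed.

Definition Tcarrier := {p : L * R | inT S0 L R barL barR p}.
Definition Tmul (u v : Tcarrier) : Tcarrier :=
  exist _ (tmul S0 L R iL iR eL fR st (proj1_sig u) (proj1_sig v))
    (tmul_closed _ _ (proj2_sig u) (proj2_sig v)).
Lemma Tmul_assoc (x y z : Tcarrier) : Tmul x (Tmul y z) = Tmul (Tmul x y) z.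
Proof. apply sig_eq; simpl. apply tmul_assoc; apply proj2_sig. Qed.
Definition Tsemigroup : semigroup := Semigroup Tcarrier Tmul Tmul_assoc.

Lemma eL_factor x : barL (eL x) = aplus (barL x) /\ eL (eL x) = eL x.
Proof.
  destruct (L_factor_e x) as (I & E1 & E2).
  destruct (L_factor_left (aplus (barL x)) (aplus (barL x)) (eL x)) as (A1 & A2 & _); auto.
  { apply aplusI. }
  rewrite E1, (aplus_of_idem _ HA _ (aplusI _)), E1 in *. auto.
Qed.

Definition T_aplus (t : Tsemigroup) : Tsemigroup.
Proof.
  refine (exist _ (eL (fst (proj1_sig t)), iR (aplus (barL (fst (proj1_sig t))))) _).
  unfold inT; simpl. rewrite (proj1 (eL_factor _)), (proj1 (R_factor_image _)). reflexivity.
Defined.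
Definition T_astar (t : Tsemigroup) : Tsemigroup.
Proof.
  refine (exist _ (iL (astar (barL (fst (proj1_sig t)))), fR (snd (proj1_sig t))) _).
  unfold inT; simpl. rewrite (proj1 (fR_factor _)), (proj1 (L_factor_image _)).
  destruct t as [[x a] Ht]; unfold inT in Ht; simpl in *. congruence.
Defined.

Lemma T_lmul1_form (t : Tsemigroup) (u : option Tsemigroup) : exists g w,
  w ⋅ aplus (barL (fst (proj1_sig t))) = w /\
  proj1_sig (lmul1 Tsemigroup u t) = (g ⋅ iL (w ⋅ barL (fst (proj1_sig t))),
                               iR (w ⋅ barL (fst (proj1_sig t))) ⋅ fR (snd (proj1_sig t))) /\
  proj1_sig (lmul1 Tsemigroup u (T_aplus t)) = (g ⋅ iL w, iR w).
Proof.
  destruct t as [[x a] Ht]; unfold inT in Ht; simpl in *.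
  destruct (L_factor_e x) as (I & E1 & E2).
  destruct (eL_factor x) as (G1 & G2).
  set (s := barL x) in *.
  destruct u as [[[y b] Hu]|]; simpl; unfold tmul; simpl.
  - exists (eL y), (st b (eL x)).
    assert (W : st b (eL x) ⋅ aplus s = st b (eL x)).
    { rewrite (st_astar_barL b (eL x)) at 2. rewrite G1,
        (astar_of_idem _ HA _ (aplusI _)). reflexivity. }
    assert (X : st b x = st b (eL x) ⋅ s).
    { pose proof (star1 (eL x) (iL s) b (iR (aplus s))) as H.
      rewrite G1, (proj1 (R_factor_image _)), (proj2 (proj2 (R_factor_image _))), G2,
        (astar_of_idem _ HA _ (aplusI _)), <- Rhom, !st_S0, aplus_mul, W in H; auto.
      rewrite H by reflexivity. f_equal. unfold s; apply L_decomp. }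
    split; auto. unfold tmul; simpl. rewrite X. split; auto.
    fold s. rewrite (proj2 (proj2 (R_factor_image _))), (astar_of_idem _ HA _ (aplusI _)),
        <- Rhom, W. reflexivity.
  - exists (eL x), (aplus s). split; [apply aplusI|].
    rewrite aplus_mul, E1; auto. split; auto. f_equal.
    + apply L_decomp.
    + rewrite Ht. apply R_decomp.
Qed.

Lemma T_RStar (t : Tsemigroup) : RStar t (T_aplus t).
Proof.
  intros u v.
  destruct (T_lmul1_form t u) as (g & w & W & U1 & U2).
  destruct (T_lmul1_form t v) as (g' & w' & W' & V1 & V2).
  destruct t as [[x a] Ht]; unfold inT in Ht; simpl in *.
  set (s := barL x) in *.
  split; intro H; apply sig_eq; apply (f_equal (@proj1_sig _ _)) in H;
    rewrite ?U1, ?U2, ?V1, ?V2 in *; injection H as H1 H2.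
  - assert (Ew : w = w').
    { destruct (R_factor_f a) as (_ & _ & F2). rewrite <- Ht in F2. fold s in F2.
      assert (H3 : iR (w ⋅ s) ⋅ fR a ⋅ iR (astar s) = iR (w' ⋅ s) ⋅ fR a ⋅ iR (astar s))
        by (rewrite H2; auto).
      rewrite <- !sassoc, F2, <- !Rhom, <- !sassoc, !mul_astar in H3; auto.
      apply Rinj in H3. apply (aplus_cancel _ HA) in H3. congruence. }
    subst w'. f_equal.
    rewrite !Lhom, !sassoc in H1. apply (RStar_cancel _ _ _ _ _ (L_RStar_aplus s)) in H1.
    rewrite <- !sassoc, <- !Lhom, W in H1. exact H1.
  - apply Rinj in H2. subst w'. f_equal.
    rewrite !Lhom, !sassoc, H1. reflexivity.
Qed.

Lemma T_rmul1_form (t : Tsemigroup) (u : option Tsemigroup) : exists h w,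
  astar (barL (fst (proj1_sig t))) ⋅ w = w /\
  proj1_sig (rmul1 Tsemigroup t u) =
    (eL (fst (proj1_sig t)) ⋅ iL (barL (fst (proj1_sig t)) ⋅ w),
     iR (barL (fst (proj1_sig t)) ⋅ w) ⋅ h) /\
  proj1_sig (rmul1 Tsemigroup (T_astar t) u) = (iL w, iR w ⋅ h).
Proof.
  destruct t as [[x a] Ht]; unfold inT in Ht; simpl in *.
  destruct (R_factor_f a) as (I & F1 & F2). rewrite <- Ht in F1, F2.
  destruct (fR_factor a) as (G1 & G2). rewrite <- Ht in G1.
  set (s := barL x) in *.
  destruct u as [[[y b] Hu]|]; simpl; unfold tmul; simpl.
  - exists (fR b), (st (fR a) y). fold s.
    assert (Wf : astar s ⋅ st (fR a) y = st (fR a) y).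
    { pose proof (aplus_barR_st (fR a) y) as K. rewrite G1,
        (aplus_of_idem _ HA _ (astarI _)) in K. exact K. }
    split; auto.
    rewrite (st_barR a y), <- Ht. split; auto.
    rewrite (proj1 (proj2 (L_factor_image _))), (aplus_of_idem _ HA _ (astarI _)), <- Lhom, Wf.
    reflexivity.
  - exists (fR a), (astar s). split; [apply astarI|].
    rewrite mul_astar, F1; auto. split; auto. f_equal.
    + apply L_decomp.
    + rewrite Ht. apply R_decomp.
Qed.

Lemma T_LStar (t : Tsemigroup) : LStar t (T_astar t).
Proof.
  intros u v.
  destruct (T_rmul1_form t u) as (h & w & W & U1 & U2).
  destruct (T_rmul1_form t v) as (h' & w' & W' & V1 & V2).
  destruct t as [[x a] Ht]; unfold inT in Ht; simpl in *.
  destruct (L_factor_e x) as (I & E1 & E2).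
  set (s := barL x) in *.
  split; intro H; apply sig_eq; apply (f_equal (@proj1_sig _ _)) in H;
    rewrite ?U1, ?U2, ?V1, ?V2 in *; injection H as H1 H2.
  - assert (Ew : w = w').
    { assert (H3 : iL (aplus s) ⋅ eL x ⋅ iL (s ⋅ w) = iL (aplus s) ⋅ eL x ⋅ iL (s ⋅ w'))
        by (rewrite <- !sassoc, H1; auto).
      rewrite E2, <- !Lhom, !sassoc, !aplus_mul in H3; auto.
      apply Linj in H3. apply (astar_cancel _ HA) in H3. congruence. }
    subst w'. f_equal.
    rewrite !Rhom, <- !sassoc in H2. apply (LStar_cancel _ _ _ _ _ (R_LStar_astar s)) in H2.
    rewrite !sassoc, <- !Rhom, W in H2. exact H2.
  - apply Linj in H1. subst w'. f_equal.
    rewrite !Rhom, <- !sassoc, H2. reflexivity.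
Qed.

Lemma st_aplus_eL x : st (iR (aplus (barL x))) (eL x) = aplus (barL x).
Proof. apply Linj. rewrite star2l. apply (L_factor_e x). Qed.
Lemma st_fR_astar a : st (fR a) (iL (astar (barR a))) = astar (barR a).
Proof. apply Rinj. rewrite star2r. apply (R_factor_f a). Qed.

Lemma iL_idem p : idem p -> iL p ⋅ iL p = iL p.
Proof. intros H; rewrite <- Lhom, H; auto. Qed.
Lemma iR_idem p : idem p -> iR p ⋅ iR p = iR p.
Proof. intros H; rewrite <- Rhom, H; auto. Qed.

Lemma T_aplus_idem t : idem (T_aplus t).
Proof.
  apply sig_eq. destruct t as [[x a] Ht]; simpl; unfold tmul; simpl.
  rewrite st_aplus_eL, (proj2 (eL_factor x)), (proj2 (proj2 (R_factor_image _))),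
      (astar_of_idem _ HA _ (aplusI _)),
    iR_idem by apply aplusI. rewrite (proj1 (proj2 (L_factor_e x))). reflexivity.
Qed.
Lemma T_astar_idem t : idem (T_astar t).
Proof.
  apply sig_eq. destruct t as [[x a] Ht]; unfold inT in Ht; simpl in *; unfold tmul; simpl.
  rewrite Ht, st_fR_astar, (proj1 (proj2 (L_factor_image _))), (aplus_of_idem _ HA _ (astarI _)),
      (proj2 (fR_factor a)),
    iL_idem by apply astarI. rewrite (proj1 (proj2 (R_factor_f a))). reflexivity.
Qed.

Lemma T_abundant : abundant Tsemigroup.
Proof.
  intros t; split.
  - exists (T_aplus t); split; [apply T_aplus_idem| apply T_RStar].
  - exists (T_astar t); split; [apply T_astar_idem| apply T_LStar].
Qed.

Definition T_embed (s : S0) : Tsemigroup.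
Proof.
  refine (exist _ (iL s, iR s) _). unfold inT; simpl.
  rewrite (proj1 (L_factor_image s)), (proj1 (R_factor_image s)). reflexivity.
Defined.

Lemma T_embed_hom : hom T_embed.
Proof.
  intros s t. apply sig_eq; simpl; unfold tmul; simpl.
  rewrite st_S0, (proj1 (proj2 (L_factor_image s))), (proj2 (proj2 (R_factor_image t))),
    <- Lhom, <- Rhom, sassoc, aplus_mul, <- sassoc, mul_astar; auto.
Qed.
Lemma T_embed_inj : injective T_embed.
Proof.
  intros s t H. apply (f_equal (fun u => fst (proj1_sig u))) in H. simpl in H. auto.
Qed.

Lemma T_aplus_embed s : T_aplus (T_embed s) = T_embed (aplus s).
Proof.
  apply sig_eq; simpl. rewrite (proj1 (L_factor_image s)),
      (proj1 (proj2 (L_factor_image s))). reflexivity.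
Qed.
Lemma T_astar_embed s : T_astar (T_embed s) = T_embed (astar s).
Proof.
  apply sig_eq; simpl. rewrite (proj1 (L_factor_image s)),
      (proj2 (proj2 (R_factor_image s))). reflexivity.
Qed.

Lemma T_embed_star : star_subsemigroup S0 Tsemigroup T_embed.
Proof.
  intros s; split.
  - exists (aplus s); split; [apply aplusI|]. rewrite <- T_aplus_embed. apply T_RStar.
  - exists (astar s); split; [apply astarI|]. rewrite <- T_astar_embed. apply T_LStar.
Qed.

Lemma barL_tmul P Q : inT S0 L R barL barR P -> inT S0 L R barL barR Q ->
  barL (fst (tmul S0 L R iL iR eL fR st P Q)) = st (snd P) (fst Q).
Proof.
  destruct P as [x a], Q as [y b]; unfold inT, tmul; simpl. intros Hp Hq.
  destruct (factor_eL_mul x (st a y)) as [A1 _]. { rewrite Hp; apply aplus_barR_st. }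
  exact A1.
Qed.

Lemma T_factor_eq (t : Tsemigroup) :
  t = T_aplus t ⋅ T_embed (barL (fst (proj1_sig t))) ⋅ T_astar t.
Proof.
  apply sig_eq. destruct t as [[x a] Ht]; unfold inT in Ht; simpl in *.
  assert (X1 : tmul S0 L R iL iR eL fR st (eL x, iR (aplus (barL x))) (iL (barL x), iR (barL x))
               = (x, iR (barL x))).
  { unfold tmul; simpl.
    rewrite (proj2 (eL_factor x)), st_S0, aplus_mul, (proj2 (proj2 (R_factor_image _))),
      <- Rhom, mul_astar, <- L_decomp; auto. }
  assert (X2 : tmul S0 L R iL iR eL fR st (x, iR (barL x)) (iL (astar (barL x)), fR a) = (x, a)).
  { unfold tmul; simpl.
    rewrite st_S0, mul_astar, (proj2 (fR_factor a)), <- L_decomp, Ht, <- R_decomp; auto. }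
  rewrite X1, X2. reflexivity.
Qed.

Lemma T_aplus_GreenL (t : Tsemigroup) :
  GreenL (T_aplus t) (T_embed (aplus (barL (fst (proj1_sig t))))).
Proof.
  destruct t as [[x a] Ht]. apply GreenL_of_eqs; apply sig_eq; simpl; unfold tmul; simpl.
  - rewrite (proj2 (eL_factor x)), st_S0, (proj2 (proj2 (R_factor_image _))), (aplusI _),
      (astar_of_idem _ HA _ (aplusI _)), iR_idem by apply aplusI.
    rewrite (proj1 (proj2 (L_factor_e x))). reflexivity.
  - rewrite st_aplus_eL, (proj1 (proj2 (L_factor_image _))), (aplus_of_idem _ HA _ (aplusI _)),
      (proj2 (proj2 (R_factor_image _))), (astar_of_idem _ HA _ (aplusI _)), iL_idem, iR_idem
      by apply aplusI.
    reflexivity.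
Qed.

Lemma T_astar_GreenR (t : Tsemigroup) :
  GreenR (T_astar t) (T_embed (astar (barL (fst (proj1_sig t))))).
Proof.
  destruct t as [[x a] Ht]; unfold inT in Ht; simpl in Ht |- *.
  apply GreenR_of_eqs; apply sig_eq; simpl; unfold tmul; simpl.
  - rewrite st_S0, (proj1 (proj2 (L_factor_image _))), (aplus_of_idem _ HA _ (astarI _)),
      (astarI _), (proj2 (fR_factor a)), iL_idem by apply astarI.
    rewrite Ht, (proj1 (proj2 (R_factor_f a))). reflexivity.
  - rewrite Ht, st_fR_astar, (proj1 (proj2 (L_factor_image _))), (aplus_of_idem _ HA _ (astarI _)),
      (proj2 (proj2 (R_factor_image _))), (astar_of_idem _ HA _ (astarI _)), iL_idem, iR_idem
      by apply astarI.
    reflexivity.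
Qed.

Lemma T_factor (t : Tsemigroup) :
  factors_through S0 Tsemigroup T_embed t (barL (fst (proj1_sig t))) (T_aplus t) (T_astar t).
Proof.
  repeat split.
  - apply T_aplus_idem.
  - apply T_astar_idem.
  - apply T_factor_eq.
  - exists (aplus (barL (fst (proj1_sig t)))). split; [apply aplus_spec;
      auto| apply T_aplus_GreenL].
  - exists (astar (barL (fst (proj1_sig t)))). split; [apply astar_spec;
      auto| apply T_astar_GreenR].
Qed.

Lemma barL_eq_idem (y : L) (p : S0) :
  idem p -> iL p ⋅ y = iL p -> barL y ⋅ p = barL y ->
  iL (barL y) ⋅ eL y ⋅ iL (barL y) = iL (barL y) -> barL y = p.
Proof.
  intros Hp I1 Hrp I2.
  set (r := barL y) in *. set (e := eL y) in *.
  destruct (L_factor_e y) as (Ie & Ee1 & Ee2). fold e r in Ie, Ee1, Ee2.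
  assert (Hy : y = e ⋅ iL r) by apply L_decomp.
  destruct (HQL p (aplus r) e) as [g Hg]. rewrite <- sassoc, Ee1 in Hg.
  assert (Gr : g ⋅ r = p).
  { apply Linj. rewrite Lhom, <- Hg, <- sassoc, <- Hy; auto. }
  assert (RGR : r ⋅ g ⋅ r = r).
  { apply Linj. rewrite !Lhom, <- Hg, sassoc, <- Lhom, Hrp. exact I2. }
  assert (Prg : aplus r = r ⋅ g).
  { apply aplus_unique; auto.
    - unfold idem. rewrite sassoc, RGR. reflexivity.
    - apply (GreenR_RStar _ _ _ r g); auto. }
  assert (I3 : iL r ⋅ e = iL (aplus r)).
  { rewrite Prg, Lhom, <- Hg, sassoc, <- Lhom, Hrp. reflexivity. }
  assert (Ye : y = e).
  { apply (proj2 HLad y); auto using RStar_refl.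
    - unfold idem. rewrite Hy. rewrite_assoc I3. rewrite_assoc Ee1. reflexivity.
    - apply RStar_of_absorb.
      + rewrite Hy. rewrite_assoc I3. exact Ee1.
      + rewrite Hy, sassoc. unfold idem in Ie. rewrite Ie. reflexivity. }
  assert (Hr : r = aplus r).
  { assert (Er1 : e ⋅ iL r = e) by (rewrite <- Hy; auto).
    apply Linj. symmetry. transitivity (iL (aplus r) ⋅ e ⋅ iL r).
    - rewrite <- sassoc, Er1, Ee2; auto.
    - rewrite Ee2, <- Lhom, aplus_mul; auto. }
  assert (Ir : idem r) by (rewrite Hr; apply aplusI).
  assert (Pr : p ⋅ r = p) by (rewrite <- Gr, <- sassoc, Ir; auto).
  rewrite <- Hrp, (idem_comm _ HA r p Ir Hp), Pr. reflexivity.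
Qed.

Lemma barR_eq_idem (c : R) (q : S0) :
  idem q -> c ⋅ iR q = iR q -> q ⋅ barR c = barR c ->
  iR (barR c) ⋅ fR c ⋅ iR (barR c) = iR (barR c) -> barR c = q.
Proof.
  intros Hq I1 Qw I2.
  set (w := barR c) in *. set (f := fR c) in *.
  destruct (R_factor_f c) as (If & Ef1 & Ef2). fold f w in If, Ef1, Ef2.
  assert (Hc : c = iR w ⋅ f) by apply R_decomp.
  destruct (HQR (astar w) q f) as [g Hg]. rewrite Ef1 in Hg.
  assert (Wg : w ⋅ g = q).
  { apply Rinj. rewrite Rhom, <- Hg, sassoc, <- Hc; auto. }
  assert (WGW : w ⋅ g ⋅ w = w).
  { apply Rinj. rewrite !Rhom, <- Hg. rewrite_assoc (eq_sym (Rhom q w)). rewrite Qw. exact I2. }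
  assert (Sgw : astar w = g ⋅ w).
  { apply astar_unique; auto.
    - unfold idem. rewrite_assoc WGW. reflexivity.
    - apply (GreenL_LStar _ _ _ w g); auto. rewrite sassoc; auto. }
  assert (I3 : f ⋅ iR w = iR (astar w)).
  { rewrite Sgw, Rhom, <- Hg, <- sassoc, <- Rhom, Qw. reflexivity. }
  assert (Ye : iR w ⋅ f = f).
  { apply (proj2 HRad (iR w ⋅ f)); auto using LStar_refl.
    - unfold idem. rewrite_assoc I3.
      rewrite_assoc (eq_sym (Rhom w (astar w))). rewrite mul_astar; auto.
    - apply LStar_of_absorb.
      + rewrite <- sassoc, If. reflexivity.
      + reassoc. rewrite I3. exact Ef1. }
  assert (Hw : w = astar w).
  { apply Rinj. rewrite <- Ef2. rewrite <- Ye at 1.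
    rewrite <- sassoc, Ef2, <- Rhom, mul_astar; auto. }
  assert (Iw : idem w) by (rewrite Hw; apply astarI).
  assert (Wq : w ⋅ q = q) by (rewrite <- Wg, sassoc, Iw; auto).
  rewrite <- Qw, (idem_comm _ HA q w Hq Iw), Wq. reflexivity.
Qed.

Lemma T_idem_GreenL_embed (E : Tsemigroup) (p : S0) :
  idem p -> idem E -> GreenL E (T_embed p) -> snd (proj1_sig E) = iR p.
Proof.
  intros Hp IE GLp.
  destruct (GreenL_idem_eqs _ _ _ IE (image_idem S0 Tsemigroup T_embed T_embed_hom _ Hp) GLp)
    as [EL1 EL2].
  clear GLp. unfold idem in IE.
  destruct E as [[y b] HE]; unfold inT in HE; simpl in HE |- *.
  apply (f_equal (@proj1_sig _ _)) in EL1, EL2, IE.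
  simpl in EL1, EL2, IE. unfold tmul in EL1, EL2, IE. simpl in EL1, EL2, IE.
  injection EL1 as _ EL1b. injection EL2 as EL2a _. injection IE as _ IEb.
  rewrite (proj2 (proj2 (R_factor_image p))), (astar_of_idem _ HA _ Hp), star2r in EL1b.
  assert (B1 : b ⋅ iR p = b) by (rewrite <- sassoc, iR_idem in EL1b; auto).
  assert (Hb : b = iR (barR b)).
  { rewrite <- B1 at 2. rewrite <- star2r, (proj1 (R_factor_image _)). rewrite star2r, B1; auto. }
  rewrite <- HE in Hb.
  rewrite Hb. f_equal. apply barL_eq_idem; auto.
  - rewrite (proj1 (proj2 (L_factor_image p))), (aplus_of_idem _ HA _ Hp), star2l, sassoc,
      iL_idem in EL2a; auto.
  - apply Rinj; rewrite Rhom, <- Hb; auto.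
  - rewrite Hb, (proj2 (proj2 (R_factor_image _))), <- Rhom in IEb. apply Rinj in IEb.
    apply (f_equal iL) in IEb.
    rewrite Lhom, star2l in IEb. rewrite (L_decomp y) in IEb at 2.
    rewrite <- !sassoc, <- Lhom, mul_astar, !sassoc in IEb; auto.
Qed.

Lemma T_idem_GreenR_embed (F : Tsemigroup) (q : S0) :
  idem q -> idem F -> GreenR F (T_embed q) -> fst (proj1_sig F) = iL q.
Proof.
  intros Hq IF GRq.
  destruct (GreenR_idem_eqs _ _ _ IF (image_idem S0 Tsemigroup T_embed T_embed_hom _ Hq) GRq)
    as [FR1 FR2].
  clear GRq. unfold idem in IF.
  destruct F as [[z c] HF]; unfold inT in HF; simpl in HF |- *.
  apply (f_equal (@proj1_sig _ _)) in FR1, FR2, IF.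
  simpl in FR1, FR2, IF. unfold tmul in FR1, FR2, IF. simpl in FR1, FR2, IF.
  injection FR1 as FR1a _. injection FR2 as _ FR2b. injection IF as IFa _.
  rewrite (proj1 (proj2 (L_factor_image q))), (aplus_of_idem _ HA _ Hq), star2l, sassoc,
    iL_idem in FR1a; auto.
  assert (Hz : z = iL (st (iR q) z)) by (rewrite star2l; auto).
  assert (Bz : barL z = st (iR q) z) by (rewrite Hz at 1; apply L_factor_image).
  rewrite Bz in HF. rewrite Hz, HF. f_equal.
  assert (Hc : c = iR (barR c) ⋅ fR c) by apply R_decomp.
  apply barR_eq_idem; auto.
  - rewrite (proj2 (proj2 (R_factor_image q))), (astar_of_idem _ HA _ Hq), star2r, <- sassoc,
      iR_idem in FR2b; auto.
  - rewrite <- HF. apply Linj; rewrite Lhom, <- Hz; auto.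
  - set (w := barR c) in *. set (f := fR c) in *.
    rewrite Hz, HF, (proj1 (proj2 (L_factor_image w))), <- Lhom in IFa. apply Linj in IFa.
    assert (K : st c (iL w) = w).
    { rewrite <- IFa at 2. apply Rinj.
      rewrite Rhom, star2r, Hc, !sassoc, <- Rhom, aplus_mul; auto. }
    apply (f_equal iR) in K. rewrite star2r, Hc in K. exact K.
Qed.

Lemma T_factor_unique (t : Tsemigroup) s' E' F' :
  factors_through S0 Tsemigroup T_embed t s' E' F' -> s' = barL (fst (proj1_sig t)).
Proof.
  intros (IE & IF & Ht & [p [[Hp HRp] GLp]] & [q [[Hq HLq] GRq]]).
  assert (Ep : aplus s' = p) by (apply aplus_unique; auto).
  assert (Eq : astar s' = q) by (apply astar_unique; auto).
  pose proof (T_idem_GreenL_embed E' p Hp IE GLp) as Er.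
  pose proof (T_idem_GreenR_embed F' q Hq IF GRq) as Ez.
  destruct E' as [[y b] HE]; destruct F' as [[z c] HF]; simpl in Er, Ez.
  transitivity (barL (fst (tmul S0 L R iL iR eL fR st
     (tmul S0 L R iL iR eL fR st (y, b) (iL s', iR s')) (z, c)))).
  2: { rewrite Ht; reflexivity. }
  rewrite barL_tmul; [| apply tmul_closed; [exact HE| apply (proj2_sig (T_embed s'))] | exact HF].
  unfold tmul; simpl.
  rewrite Er, st_S0, (proj2 (proj2 (R_factor_image s'))), <- Rhom, <- Ep, aplus_mul,
    mul_astar; auto.
  rewrite Ez, st_S0, <- Eq, mul_astar; auto.
Qed.

Lemma T_embed_quasi_ideal : quasi_ideal T_embed.
Proof.
  intros s u [[x a] Ht]. unfold inT in Ht; simpl in Ht.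
  set (m := st (iR s) x).
  set (n := st (iR m ⋅ fR a) (iL u)).
  exists n. apply sig_eq. simpl; unfold tmul; simpl. fold m. fold n.
  assert (M1 : aplus s ⋅ m = m).
  { pose proof (aplus_barR_st (iR s) x) as K. rewrite (proj1 (R_factor_image s)) in K. exact K. }
  assert (M2 : m ⋅ astar (barR a) = m) by (rewrite <- Ht; symmetry; apply st_astar_barL).
  destruct (factor_mul_fR a m M2) as [B1 _].
  assert (N1 : aplus m ⋅ n = n).
  { pose proof (aplus_barR_st (iR m ⋅ fR a) (iL u)) as K. rewrite B1 in K. exact K. }
  assert (N2 : n ⋅ astar u = n).
  { pose proof (st_astar_barL (iR m ⋅ fR a) (iL u)) as K.
    rewrite (proj1 (L_factor_image u)) in K. symmetry; exact K. }
  rewrite (proj1 (proj2 (L_factor_image s))), <- Lhom, M1, (proj1 (proj2 (L_factor_image m))),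
    <- Lhom, N1, (proj2 (proj2 (R_factor_image u))), <- Rhom, N2. reflexivity.
Qed.

Lemma T_iso : iso_onto Tsemigroup (inT S0 L R barL barR) (tmul S0 L R iL iR eL fR st)
  (@proj1_sig _ _).
Proof.
  split; [|split; [|split]].
  - intros u v H; apply sig_eq; exact H.
  - intros u; exact (proj2_sig u).
  - intros p Hp; exists (exist _ p Hp); reflexivity.
  - intros u v; reflexivity.
Qed.

Lemma T_embed_transversal : adequate_transversal T_embed.
Proof.
  split; [apply T_embed_hom|split; [apply T_embed_inj|split; [exact HA|split]]].
  - apply T_embed_star.
  - intros t. exists (barL (fst (proj1_sig t))). split.
    + exists (T_aplus t), (T_astar t). apply T_factor.
    + intros s' [E' [F' H]]. symmetry. eapply T_factor_unique; eauto.
Qed.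

Lemma construction_correct : exists (T : semigroup) (phi : T -> L * R),
  iso_onto T (inT S0 L R barL barR) (tmul S0 L R iL iR eL fR st) phi /\
  abundant T /\
  exists j : S0 -> T,
    adequate_transversal j /\ quasi_ideal j /\ forall s : S0, phi (j s) = (iL s, iR s).
Proof.
  exists Tsemigroup, (@proj1_sig _ _). split; [apply T_iso|split; [apply T_abundant|]].
  exists T_embed. split; [apply T_embed_transversal|split; [apply T_embed_quasi_ideal|]].
  intros s; reflexivity.
Qed.
End Construction.

Section Subsemigroup.
Variables (S : semigroup) (P : S -> Prop) (Hc : forall x y, P x -> P y -> P (x ⋅ y)).
Definition sub_op (u v : {x | P x}) : {x | P x} :=
  exist _ (proj1_sig u ⋅ proj1_sig v) (Hc _ _ (proj2_sig u) (proj2_sig v)).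
Lemma sub_assoc (x y z : {x | P x}) : sub_op x (sub_op y z) = sub_op (sub_op x y) z.
Proof. apply sig_eq; simpl; apply sassoc. Qed.
Definition subsemigroup : semigroup := Semigroup {x | P x} sub_op sub_assoc.

Lemma sub_lmul1 (u : option subsemigroup) (a : subsemigroup) :
  proj1_sig (lmul1 subsemigroup u a) = lmul1 S (option_map (@proj1_sig _ _) u) (proj1_sig a).
Proof. destruct u; reflexivity. Qed.
Lemma sub_rmul1 (u : option subsemigroup) (a : subsemigroup) :
  proj1_sig (rmul1 subsemigroup a u) = rmul1 S (proj1_sig a) (option_map (@proj1_sig _ _) u).
Proof. destruct u; reflexivity. Qed.
Lemma sub_RStar (a b : subsemigroup) : RStar (proj1_sig a) (proj1_sig b) -> RStar a b.
Proof.
  intros H u v. specialize (H (option_map (@proj1_sig _ _) u) (option_map (@proj1_sig _ _) v)).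
  split; intro E.
  - apply sig_eq. rewrite !sub_lmul1. apply H. rewrite <- !sub_lmul1, E; auto.
  - apply sig_eq. rewrite !sub_lmul1. apply H. rewrite <- !sub_lmul1, E; auto.
Qed.
Lemma sub_LStar (a b : subsemigroup) : LStar (proj1_sig a) (proj1_sig b) -> LStar a b.
Proof.
  intros H u v. specialize (H (option_map (@proj1_sig _ _) u) (option_map (@proj1_sig _ _) v)).
  split; intro E.
  - apply sig_eq. rewrite !sub_rmul1. apply H. rewrite <- !sub_rmul1, E; auto.
  - apply sig_eq. rewrite !sub_rmul1. apply H. rewrite <- !sub_rmul1, E; auto.
Qed.
Lemma sub_idem (a : subsemigroup) : idem a -> idem (proj1_sig a).
Proof. intros H; unfold idem in *. apply (f_equal (@proj1_sig _ _)) in H. exact H. Qed.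
Lemma sub_idem_of (a : subsemigroup) : idem (proj1_sig a) -> idem a.
Proof. intros H; unfold idem in *. apply sig_eq. exact H. Qed.
Lemma sub_GreenL (a b : subsemigroup) : GreenL a b -> GreenL (proj1_sig a) (proj1_sig b).
Proof.
  intros [[u Hu] [v Hv]]; split.
  - exists (option_map (@proj1_sig _ _) u). rewrite Hu at 1. apply sub_lmul1.
  - exists (option_map (@proj1_sig _ _) v). rewrite Hv at 1. apply sub_lmul1.
Qed.
Lemma sub_GreenR (a b : subsemigroup) : GreenR a b -> GreenR (proj1_sig a) (proj1_sig b).
Proof.
  intros [[u Hu] [v Hv]]; split.
  - exists (option_map (@proj1_sig _ _) u). rewrite Hu at 1. apply sub_rmul1.
  - exists (option_map (@proj1_sig _ _) v). rewrite Hv at 1. apply sub_rmul1.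
Qed.
End Subsemigroup.

Section Decomposition.
Variables (S S0 : semigroup) (j : S0 -> S).
Hypotheses (Hhom : hom j) (Hinj : injective j) (HA : adequate S0)
  (Hstar : star_subsemigroup S0 S j)
  (Huniq : forall x : S, exists! s : S0, exists e f : S, factors_through S0 S j x s e f)
  (HQ : quasi_ideal j).

Lemma factor_triple_inhabited (x : S) : inhabited (S0 * S * S).
Proof. destruct (Huniq x) as [s [[e' [f' _]] _]]. constructor. exact (s, e', f'). Qed.
Definition factor_triple (x : S) : S0 * S * S :=
  epsilon (factor_triple_inhabited x)
    (fun t => factors_through S0 S j x (fst (fst t)) (snd (fst t)) (snd t)).
Definition bar (x : S) : S0 := fst (fst (factor_triple x)).
Definition ee (x : S) : S := snd (fst (factor_triple x)).
Definition ff (x : S) : S := snd (factor_triple x).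
Lemma chosen_factorisation : factorisation j bar ee ff.
Proof.
  intros x; unfold bar, ee, ff, factor_triple. apply epsilon_spec.
  destruct (Huniq x) as [s [[e' [f' H]] _]]. exists (s, e', f'). exact H.
Qed.

Let aplusI := aplus_idem S0 HA. Let astarI := astar_idem S0 HA.
Let j_RStar := RStar_image_aplus S0 S j Hhom Hinj HA Hstar.
Let j_LStar := LStar_image_astar S0 S j Hhom Hinj HA Hstar.
Let ee_spec := factor_e S0 S j bar ee ff Hhom HA chosen_factorisation.
Let ff_spec := factor_f S0 S j bar ee ff Hhom HA chosen_factorisation.
Let factor_eq_S := factor_eq S0 S j bar ee ff chosen_factorisation.
Let factor_image_S := factor_image S0 S j bar ee ff Hhom Hinj HA Hstar Huniq chosen_factorisation.
Let factor_left_S := factor_left S0 S j bar ee ff Hhom Hinj HA Hstar Huniq chosen_factorisation.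
Let factor_right_S := factor_right S0 S j bar ee ff Hhom Hinj HA Hstar Huniq chosen_factorisation.
Let factor_sandwich_S :=
  factor_sandwich S0 S j bar ee ff Hhom Hinj HA Hstar Huniq chosen_factorisation.
Let factor_of_eqs_S := factor_of_eqs S0 S j bar ee ff Hhom Hinj HA Hstar Huniq chosen_factorisation.
Let bar_unique_S := factor_bar_unique S0 S j bar ee ff Huniq chosen_factorisation.
Let j_aplus_mul := image_aplus_mul S0 S j Hhom HA.
Let j_mul_astar := image_mul_astar S0 S j Hhom HA.
Let j_image_idem := image_idem S0 S j Hhom.

Lemma j_idem p : idem p -> j p ⋅ j p = j p.
Proof. intros H. exact (j_image_idem p H). Qed.

Lemma factor_mul x y : exists m,
  j m = j (bar x) ⋅ ff x ⋅ ee y ⋅ j (bar y) /\ x ⋅ y = ee x ⋅ j m ⋅ ff y /\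
  bar (x ⋅ y) = m /\ ee (x ⋅ y) = ee x ⋅ j (aplus m) /\ ff (x ⋅ y) = j (astar m) ⋅ ff y /\
  aplus (bar x) ⋅ m = m /\ m ⋅ astar (bar y) = m.
Proof.
  destruct (HQ (bar x) (bar y) (ff x ⋅ ee y)) as [m Hm].
  rewrite <- sassoc in Hm.
  assert (Hm' : j (bar x) ⋅ ff x ⋅ ee y ⋅ j (bar y) = j m)
    by (rewrite <- Hm; reassoc; reflexivity).
  assert (M1 : aplus (bar x) ⋅ m = m).
  { apply Hinj. rewrite Hhom, <- Hm'. rewrite_assoc (j_aplus_mul (bar x)). reflexivity. }
  assert (M2 : m ⋅ astar (bar y) = m).
  { apply Hinj. rewrite Hhom, <- Hm'. rewrite_assoc (j_mul_astar (bar y)). reflexivity. }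
  assert (Exy : x ⋅ y = ee x ⋅ j m ⋅ ff y).
  { transitivity ((ee x ⋅ j (bar x) ⋅ ff x) ⋅ (ee y ⋅ j (bar y) ⋅ ff y)).
    - rewrite <- !factor_eq_S. reflexivity.
    - rewrite_assoc Hm'. reflexivity. }
  destruct (ee_spec x) as (I1 & E1 & E2). destruct (ff_spec y) as (I2 & F1 & F2).
  destruct (factor_sandwich_S m (aplus (bar x)) (astar (bar y)) (ee x) (ff y))
    as (A1 & A2 & A3); auto.
  exists m. rewrite Exy. auto 10.
Qed.

(* L and R consist of the elements of the form e_x xbar, resp. abar f_a. *)
Definition inL (x : S) : Prop := ff x = j (astar (bar x)).
Definition inR (x : S) : Prop := ee x = j (aplus (bar x)).

Lemma inL_mul x y : inL x -> inL y -> inL (x ⋅ y).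
Proof.
  unfold inL; intros Hx Hy.
  destruct (factor_mul x y) as (m & _ & _ & B & _ & F & _ & M2).
  rewrite F, B, Hy, <- Hhom, (astar_absorb _ HA); auto.
Qed.
Lemma inR_mul x y : inR x -> inR y -> inR (x ⋅ y).
Proof.
  unfold inR; intros Hx Hy.
  destruct (factor_mul x y) as (m & _ & _ & B & E & _ & M1 & _).
  rewrite E, B, Hx, <- Hhom, (aplus_absorb _ HA); auto.
Qed.

Definition Lsg : semigroup := subsemigroup S inL inL_mul.
Definition Rsg : semigroup := subsemigroup S inR inR_mul.

Lemma inL_factor x : inL x -> x = ee x ⋅ j (bar x).
Proof. unfold inL; intros H. rewrite (factor_eq_S x) at 1. rewrite H, <- sassoc,
    j_mul_astar. reflexivity. Qed.
Lemma inR_factor a : inR a -> a = j (bar a) ⋅ ff a.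
Proof. unfold inR; intros H. rewrite (factor_eq_S a) at 1. rewrite H, j_aplus_mul. reflexivity. Qed.

Lemma inL_image s : inL (j s).
Proof. unfold inL. rewrite (proj1 (factor_image_S s)),
    (proj2 (proj2 (factor_image_S s))). reflexivity. Qed.
Lemma inR_image s : inR (j s).
Proof. unfold inR. rewrite (proj1 (factor_image_S s)),
    (proj1 (proj2 (factor_image_S s))). reflexivity. Qed.

Lemma ee_factor x : bar (ee x) = aplus (bar x) /\ ee (ee x) = ee x /\ inL (ee x).
Proof.
  destruct (ee_spec x) as (I & E1 & E2).
  destruct (factor_left_S (aplus (bar x)) (aplus (bar x)) (ee x)) as (A1 & A2 & A3); auto.
  all: try apply aplusI.
  rewrite E1 in A1, A2, A3. rewrite (aplus_of_idem _ HA _ (aplusI _)), E1 in A2.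
  rewrite (astar_of_idem _ HA _ (aplusI _)) in A3. unfold inL. rewrite A1, A3,
      (astar_of_idem _ HA _ (aplusI _)). auto.
Qed.
Lemma ff_factor x : bar (ff x) = astar (bar x) /\ ff (ff x) = ff x /\ inR (ff x).
Proof.
  destruct (ff_spec x) as (I & F1 & F2).
  destruct (factor_right_S (astar (bar x)) (astar (bar x)) (ff x)) as (A1 & A2 & A3); auto.
  all: try apply astarI.
  rewrite F1 in A1, A2, A3. rewrite (astar_of_idem _ HA _ (astarI _)), F1 in A3.
  rewrite (aplus_of_idem _ HA _ (astarI _)) in A2. unfold inR. rewrite A1, A2,
      (aplus_of_idem _ HA _ (astarI _)). auto.
Qed.

Definition iL (s : S0) : Lsg := exist _ (j s) (inL_image s).
Definition iR (s : S0) : Rsg := exist _ (j s) (inR_image s).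
Definition barL (x : Lsg) : S0 := bar (proj1_sig x).
Definition barR (x : Rsg) : S0 := bar (proj1_sig x).
Definition eL (x : Lsg) : Lsg := exist _ (ee (proj1_sig x)) (proj2 (proj2 (ee_factor _))).
Definition fL (x : Lsg) : Lsg := iL (astar (barL x)).
Definition eR (a : Rsg) : Rsg := iR (aplus (barR a)).
Definition fR (a : Rsg) : Rsg := exist _ (ff (proj1_sig a)) (proj2 (proj2 (ff_factor _))).

Lemma mul_RL_in_S0 (a : Rsg) (x : Lsg) : exists m, j m = proj1_sig a ⋅ proj1_sig x.
Proof.
  destruct a as [a Ha], x as [x Hx]; simpl.
  destruct (HQ (bar a) (bar x) (ff a ⋅ ee x)) as [m Hm]. exists m.
  rewrite <- Hm. transitivity ((j (bar a) ⋅ ff a) ⋅ (ee x ⋅ j (bar x))).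
  - reassoc; reflexivity.
  - rewrite <- inR_factor, <- inL_factor; auto.
Qed.
(* a * x is the product a x, read back in S0. *)
Definition st (a : Rsg) (x : Lsg) : S0 :=
  epsilon (inhabits (bar (proj1_sig x))) (fun m => j m = proj1_sig a ⋅ proj1_sig x).
Lemma st_spec a x : j (st a x) = proj1_sig a ⋅ proj1_sig x.
Proof. unfold st. apply (epsilon_spec _ (fun m => j m = proj1_sig a ⋅ proj1_sig x));
    apply mul_RL_in_S0. Qed.

Lemma RStar_of_left_factor (x e' : S) s : x = e' ⋅ j s -> e' ⋅ j (aplus s) = e' -> RStar x e'.
Proof.
  intros Hx He u v; split; intro E.
  - rewrite Hx, !lmul1_assoc in E. apply (RStar_cancel _ _ _ _ _ (j_RStar s)) in E.
    rewrite <- !lmul1_assoc, He in E. exact E.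
  - rewrite Hx, !lmul1_assoc, E. reflexivity.
Qed.
Lemma LStar_of_left_factor (x e' : S) s : x = e' ⋅ j s -> j (aplus s) ⋅ e' = j (aplus s) ->
    LStar x (j (astar s)).
Proof.
  intros Hx He u v; split; intro E.
  - rewrite Hx, !rmul1_assoc in E. apply (f_equal (fun z => j (aplus s) ⋅ z)) in E.
    rewrite !sassoc, He, <- !rmul1_assoc, j_aplus_mul in E. exact (proj1 (j_LStar s u v) E).
  - rewrite Hx, !rmul1_assoc. f_equal. exact (proj2 (j_LStar s u v) E).
Qed.
Lemma LStar_of_right_factor (a f' : S) s : a = j s ⋅ f' -> j (astar s) ⋅ f' = f' -> LStar a f'.
Proof.
  intros Ha Hf u v; split; intro E.
  - rewrite Ha, !rmul1_assoc in E. apply (LStar_cancel _ _ _ _ _ (j_LStar s)) in E.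
    rewrite <- !rmul1_assoc, Hf in E. exact E.
  - rewrite Ha, !rmul1_assoc, E. reflexivity.
Qed.
Lemma RStar_of_right_factor (a f' : S) s : a = j s ⋅ f' -> f' ⋅ j (astar s) = j (astar s) ->
    RStar a (j (aplus s)).
Proof.
  intros Ha Hf u v; split; intro E.
  - rewrite Ha, !lmul1_assoc in E. apply (f_equal (fun z => z ⋅ j (astar s))) in E.
    rewrite <- !sassoc, Hf, <- !lmul1_assoc, j_mul_astar in E. exact (proj1 (j_RStar s u v) E).
  - rewrite Ha, !lmul1_assoc. f_equal. exact (proj2 (j_RStar s u v) E).
Qed.

Lemma inL_idem_factor (g : S) : inL g -> idem g -> ee g = g /\ idem (bar g).
Proof.
  intros HL Ig. set (q := astar (bar g)).
  assert (Iq : idem q) by apply astarI.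
  destruct (ee_spec g) as (Ie & E1 & E2).
  assert (LS : LStar g (j q)) by (apply (LStar_of_left_factor g (ee g) (bar g)); auto;
      apply inL_factor; auto).
  assert (G1 : g ⋅ j q = g) by (apply LStar_idem_mul; auto).
  assert (G2 : j q ⋅ g = j q) by (apply LStar_idem_mul; auto using LStar_sym).
  pose proof (j_idem q Iq) as Jq.
  destruct (factor_of_eqs_S g q g (j q)) as (A1 & A2 & A3); auto;
    rewrite ?(aplus_of_idem _ HA _ Iq), ?(astar_of_idem _ HA _ Iq); auto.
  rewrite G1; auto.
  split; auto. rewrite A1; auto.
Qed.
Lemma inR_idem_factor (a : S) : inR a -> idem a -> ff a = a /\ idem (bar a).
Proof.
  intros HR Ia. set (p := aplus (bar a)).
  assert (Ip : idem p) by apply aplusI.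
  destruct (ff_spec a) as (If & F1 & F2).
  assert (RS : RStar a (j p)) by (apply (RStar_of_right_factor a (ff a) (bar a)); auto;
      apply inR_factor; auto).
  assert (G1 : j p ⋅ a = a) by (apply RStar_idem_mul; auto).
  assert (G2 : a ⋅ j p = j p) by (apply RStar_idem_mul; auto using RStar_sym).
  pose proof (j_idem p Ip) as Jp.
  destruct (factor_of_eqs_S a p (j p) a) as (A1 & A2 & A3); auto;
    rewrite ?(aplus_of_idem _ HA _ Ip), ?(astar_of_idem _ HA _ Ip); auto.
  rewrite Jp, G1; auto.
  split; auto. rewrite A1; auto.
Qed.

Lemma inL_idem_eq (g h : S) : inL g -> inL h -> idem g -> idem h ->
  h ⋅ g = g -> g ⋅ h = h -> g = h.
Proof.
  intros Lg Lh Ig Ih Hhg Hgh.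
  destruct (inL_idem_factor g Lg Ig) as [Eg Ip]. destruct (inL_idem_factor h Lh Ih) as [Eh Ip'].
  set (p := bar g) in *. set (p' := bar h) in *.
  destruct (ee_spec g) as (_ & G1 & G2). destruct (ee_spec h) as (_ & H1 & H2).
  fold p in G1, G2. fold p' in H1, H2.
  rewrite Eg, (aplus_of_idem _ HA _ Ip) in G1, G2. rewrite Eh, (aplus_of_idem _ HA _ Ip') in H1, H2.
  destruct (HQ p' p g) as [c Hc]. rewrite <- sassoc, G1 in Hc.
  assert (hc : h ⋅ j c = g) by (rewrite <- Hc, sassoc, H1; auto).
  assert (C1 : p' ⋅ c = c).
  { apply Hinj. rewrite Hhom, <- Hc, sassoc, (j_idem p' Ip'). reflexivity. }
  assert (C2 : p' ⋅ aplus c = aplus c) by (apply aplus_absorb; auto).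
  assert (C3 : j c ⋅ h = j p') by (rewrite <- Hc, <- sassoc, Hgh; auto).
  assert (C4 : aplus c ⋅ p' = p').
  { apply Hinj. rewrite Hhom, <- C3, sassoc, j_aplus_mul. reflexivity. }
  assert (Pc : aplus c = p').
  { rewrite <- C4, (idem_comm _ HA _ _ (aplusI c) Ip'), C2. reflexivity. }
  destruct (factor_of_eqs_S g c h (j (astar c))) as (A1 & A2 & A3).
  all: try solve [auto | apply j_image_idem, astarI | rewrite Pc; auto | apply (j_idem _ (astarI c))
    | rewrite <- hc at 1; rewrite_assoc (j_mul_astar c); reflexivity | congruence].
Qed.

Lemma inR_idem_eq (g h : S) : inR g -> inR h -> idem g -> idem h ->
  g ⋅ h = g -> h ⋅ g = h -> g = h.
Proof.
  intros Rg Rh Ig Ih Hgh Hhg.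
  destruct (inR_idem_factor g Rg Ig) as [Eg Ip]. destruct (inR_idem_factor h Rh Ih) as [Eh Ip'].
  set (p := bar g) in *. set (p' := bar h) in *.
  destruct (ff_spec g) as (_ & G1 & G2). destruct (ff_spec h) as (_ & H1 & H2).
  fold p in G1, G2. fold p' in H1, H2.
  rewrite Eg, (astar_of_idem _ HA _ Ip) in G1, G2. rewrite Eh, (astar_of_idem _ HA _ Ip') in H1, H2.
  destruct (HQ p p' g) as [c Hc]. rewrite G1 in Hc.
  assert (ch : j c ⋅ h = g) by (rewrite <- Hc, <- sassoc, H1; auto).
  assert (C1 : c ⋅ p' = c).
  { apply Hinj. rewrite Hhom, <- Hc, <- sassoc, (j_idem p' Ip'). reflexivity. }
  assert (C2 : astar c ⋅ p' = astar c) by (apply astar_absorb; auto).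
  assert (C3 : h ⋅ j c = j p') by (rewrite <- Hc, sassoc, Hhg; auto).
  assert (C4 : p' ⋅ astar c = p').
  { apply Hinj. rewrite Hhom, <- C3, <- sassoc, j_mul_astar. reflexivity. }
  assert (Sc : astar c = p').
  { rewrite <- C4, (idem_comm _ HA _ _ Ip' (astarI c)), C2. reflexivity. }
  destruct (factor_of_eqs_S g c (j (aplus c)) h) as (A1 & A2 & A3).
  all: try solve [auto | apply j_image_idem, aplusI | rewrite Sc; auto | apply (j_idem _ (aplusI c))
    | rewrite j_aplus_mul, ch; reflexivity | congruence].
Qed.

Lemma Lsg_left_adequate : left_adequate Lsg.
Proof.
  split.
  - intros [x Hx]. split.
    + exists (eL (exist _ x Hx)). split.
      * apply sub_idem_of. simpl. apply ee_spec.
      * apply sub_RStar. simpl.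
        apply (RStar_of_left_factor x (ee x) (bar x)); [apply inL_factor; auto| apply ee_spec].
    + exists (fL (exist _ x Hx)). split.
      * apply sub_idem_of. simpl. apply j_image_idem, astarI.
      * apply sub_LStar. simpl.
        apply (LStar_of_left_factor x (ee x) (bar x)); [apply inL_factor; auto| apply ee_spec].
  - intros a g h Ig Ih Hg Hh.
    assert (H : RStar g h) by (eapply RStar_trans; [apply RStar_sym, Hg| exact Hh]).
    assert (H1 : h ⋅ g = g) by (apply (RStar_idem_mul _ g h Ih H)).
    assert (H2 : g ⋅ h = h) by (apply (RStar_idem_mul _ h g Ig (RStar_sym _ _ _ H))).
    apply (f_equal (@proj1_sig _ _)) in H1, H2.
    apply sig_eq, inL_idem_eq; try apply sub_idem; auto; apply proj2_sig.
Qed.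
Lemma Rsg_right_adequate : right_adequate Rsg.
Proof.
  split.
  - intros [x Hx]. split.
    + exists (eR (exist _ x Hx)). split.
      * apply sub_idem_of. simpl. apply j_image_idem, aplusI.
      * apply sub_RStar. simpl.
        apply (RStar_of_right_factor x (ff x) (bar x)); [apply inR_factor; auto| apply ff_spec].
    + exists (fR (exist _ x Hx)). split.
      * apply sub_idem_of. simpl. apply ff_spec.
      * apply sub_LStar. simpl.
        apply (LStar_of_right_factor x (ff x) (bar x)); [apply inR_factor; auto| apply ff_spec].
  - intros a g h Ig Ih Hg Hh.
    assert (H : LStar g h) by (eapply LStar_trans; [apply LStar_sym, Hg| exact Hh]).
    assert (H1 : g ⋅ h = g) by (apply (LStar_idem_mul _ g h Ih H)).
    assert (H2 : h ⋅ g = h) by (apply (LStar_idem_mul _ h g Ig (LStar_sym _ _ _ H))).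
    apply (f_equal (@proj1_sig _ _)) in H1, H2.
    apply sig_eq, inR_idem_eq; try apply sub_idem; auto; apply proj2_sig.
Qed.

Lemma sub_factor_transfer (P : S -> Prop) Hc (iP : S0 -> subsemigroup S P Hc)
  (HiP : forall s, proj1_sig (iP s) = j s) x s E F :
  factors_through S0 (subsemigroup S P Hc) iP x s E F ->
  factors_through S0 S j (proj1_sig x) s (proj1_sig E) (proj1_sig F).
Proof.
  intros (IE & IF & Hx & [p [Hp GL]] & [q [Hq GR]]).
  repeat split.
  - apply sub_idem; auto.
  - apply sub_idem; auto.
  - rewrite Hx at 1. simpl. rewrite HiP. reflexivity.
  - exists p. split; auto. rewrite <- HiP. apply sub_GreenL; auto.
  - exists q. split; auto. rewrite <- HiP. apply sub_GreenR; auto.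
Qed.

Lemma Lsg_factor (x : Lsg) : factors_through S0 Lsg iL x (barL x) (eL x) (fL x).
Proof.
  destruct x as [x Hx]. unfold barL, eL, fL; simpl.
  destruct (ee_spec x) as (I & E1 & E2).
  repeat split.
  - apply sub_idem_of; exact I.
  - apply sub_idem_of; apply j_image_idem, astarI.
  - apply sig_eq; simpl. rewrite <- sassoc, j_mul_astar. apply inL_factor; auto.
  - exists (aplus (bar x)). split; [apply aplus_spec; auto|].
    apply GreenL_of_eqs; apply sig_eq; simpl; auto.
  - exists (astar (bar x)). split; [apply astar_spec; auto|].
    apply GreenR_of_eqs; apply sig_eq; simpl; apply (j_idem _ (astarI _)).
Qed.
Lemma Rsg_factor (a : Rsg) : factors_through S0 Rsg iR a (barR a) (eR a) (fR a).
Proof.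
  destruct a as [a Ha]. unfold barR, eR, fR; simpl.
  destruct (ff_spec a) as (I & F1 & F2).
  repeat split.
  - apply sub_idem_of; apply j_image_idem, aplusI.
  - apply sub_idem_of; exact I.
  - apply sig_eq; simpl. rewrite j_aplus_mul. apply inR_factor; auto.
  - exists (aplus (bar a)). split; [apply aplus_spec; auto|].
    apply GreenL_of_eqs; apply sig_eq; simpl; apply (j_idem _ (aplusI _)).
  - exists (astar (bar a)). split; [apply astar_spec; auto|].
    apply GreenR_of_eqs; apply sig_eq; simpl; auto.
Qed.

Lemma iL_transversal : adequate_transversal iL.
Proof.
  split; [|split; [|split; [exact HA|split]]].
  - intros s t; apply sig_eq; simpl; apply Hhom.
  - intros s t H; apply Hinj; exact (f_equal (@proj1_sig _ _) H).
  - intros s; split.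
    + exists (aplus s); split; [apply aplusI| apply sub_RStar; apply j_RStar].
    + exists (astar s); split; [apply astarI| apply sub_LStar; apply j_LStar].
  - intros x. exists (barL x). split.
    + exists (eL x), (fL x). apply Lsg_factor.
    + intros s' [E' [F' H]]. apply (sub_factor_transfer _ _ iL (fun _ => eq_refl)) in H.
      unfold barL. eapply bar_unique_S; eauto.
Qed.
Lemma iR_transversal : adequate_transversal iR.
Proof.
  split; [|split; [|split; [exact HA|split]]].
  - intros s t; apply sig_eq; simpl; apply Hhom.
  - intros s t H; apply Hinj; exact (f_equal (@proj1_sig _ _) H).
  - intros s; split.
    + exists (aplus s); split; [apply aplusI| apply sub_RStar; apply j_RStar].
    + exists (astar s); split; [apply astarI| apply sub_LStar; apply j_LStar].
  - intros x. exists (barR x). split.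
    + exists (eR x), (fR x). apply Rsg_factor.
    + intros s' [E' [F' H]]. apply (sub_factor_transfer _ _ iR (fun _ => eq_refl)) in H.
      unfold barR. eapply bar_unique_S; eauto.
Qed.
Lemma iL_quasi_ideal : quasi_ideal iL.
Proof.
  intros s t x. destruct (HQ s t (proj1_sig x)) as [u Hu]. exists u. apply sig_eq. exact Hu.
Qed.
Lemma iR_quasi_ideal : quasi_ideal iR.
Proof.
  intros s t x. destruct (HQ s t (proj1_sig x)) as [u Hu]. exists u. apply sig_eq. exact Hu.
Qed.

Lemma st_star_axioms : star_axioms S0 Lsg Rsg iL iR barL eL barR fR st.
Proof.
  split; [|split].
  - intros [y Hy] [z Hz] [a Ha] [b Hb] Hyb. unfold barL, barR in Hyb; simpl in Hyb.
    apply Hinj. rewrite !st_spec. simpl. rewrite !st_spec. simpl.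
    assert (K : y ⋅ ff b = ee y ⋅ b).
    { transitivity (ee y ⋅ j (bar y) ⋅ ff b).
      - f_equal. apply inL_factor; auto.
      - rewrite Hyb, <- sassoc, <- inR_factor; auto. }
    rewrite_assoc K. reflexivity.
  - intros s x. apply sig_eq. simpl. apply st_spec.
  - intros a t. apply sig_eq. simpl. apply st_spec.
Qed.

Lemma psiL_in x : inL (ee x ⋅ j (bar x)).
Proof.
  destruct (ee_spec x) as (I & E1 & E2).
  destruct (factor_left_S (bar x) (aplus (bar x)) (ee x)) as (A1 & A2 & A3); auto using aplus_mul.
  unfold inL. rewrite A1, A3. reflexivity.
Qed.
Lemma psiR_in x : inR (j (bar x) ⋅ ff x).
Proof.
  destruct (ff_spec x) as (I & F1 & F2).
  destruct (factor_right_S (bar x) (astar (bar x)) (ff x)) as (A1 & A2 & A3); auto using mul_astar.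
  unfold inR. rewrite A1, A2. reflexivity.
Qed.
Definition psi (x : S) : Lsg * Rsg :=
  (exist _ (ee x ⋅ j (bar x)) (psiL_in x), exist _ (j (bar x) ⋅ ff x) (psiR_in x)).

Lemma psiL_factor x : bar (ee x ⋅ j (bar x)) = bar x /\ ee (ee x ⋅ j (bar x)) = ee x.
Proof.
  destruct (ee_spec x) as (I & E1 & E2).
  destruct (factor_left_S (bar x) (aplus (bar x)) (ee x)) as (A1 & A2 & A3); auto using aplus_mul.
  rewrite A2, E1. auto.
Qed.
Lemma psiR_factor x : bar (j (bar x) ⋅ ff x) = bar x /\ ff (j (bar x) ⋅ ff x) = ff x.
Proof.
  destruct (ff_spec x) as (I & F1 & F2).
  destruct (factor_right_S (bar x) (astar (bar x)) (ff x)) as (A1 & A2 & A3); auto using mul_astar.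
  rewrite A3, F1. auto.
Qed.

Lemma psi_iso : iso_onto S (inT S0 Lsg Rsg barL barR) (tmul S0 Lsg Rsg iL iR eL fR st) psi.
Proof.
  split; [|split; [|split]].
  - intros u v H. unfold psi in H. injection H as H1 H2.
    assert (Eb : bar u = bar v).
    { rewrite <- (proj1 (psiL_factor u)), <- (proj1 (psiL_factor v)), H1. reflexivity. }
    rewrite Eb in H1, H2.
    assert (Ee : ee u = ee v).
    { apply (RStar_cancel _ _ _ _ _ (j_RStar (bar v))) in H1.
      destruct (ee_spec u) as (_ & E1 & _). destruct (ee_spec v) as (_ & E1' & _).
      rewrite Eb in E1. rewrite E1, E1' in H1. exact H1. }
    assert (Ef : ff u = ff v).
    { apply (LStar_cancel _ _ _ _ _ (j_LStar (bar v))) in H2.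
      destruct (ff_spec u) as (_ & F1 & _). destruct (ff_spec v) as (_ & F1' & _).
      rewrite Eb in F1. rewrite F1, F1' in H2. exact H2. }
    rewrite (factor_eq_S u), (factor_eq_S v), Eb, Ee, Ef. reflexivity.
  - intros u. unfold inT, psi, barL, barR; simpl.
    rewrite (proj1 (psiL_factor u)), (proj1 (psiR_factor u)). reflexivity.
  - intros [[l Hl] [a Ha]] Hp. unfold inT, barL, barR in Hp; simpl in Hp.
    set (s := bar l) in *.
    destruct (ee_spec l) as (I1 & E1 & E2). destruct (ff_spec a) as (I2 & F1 & F2).
    rewrite <- Hp in F1, F2.
    destruct (factor_of_eqs_S (ee l ⋅ j s ⋅ ff a) s (ee l) (ff a)) as (A1 & A2 & A3); auto.
    exists (ee l ⋅ j s ⋅ ff a). unfold psi. f_equal; apply sig_eq; simpl.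
    + rewrite A1, A2. symmetry. apply inL_factor; auto.
    + rewrite A1, A3, Hp. symmetry. apply inR_factor; auto.
  - intros x y. unfold psi, tmul; simpl.
    destruct (factor_mul x y) as (m & Hm & Exy & B & E & F & M1 & M2).
    assert (Sm : st (exist _ (j (bar x) ⋅ ff x) (psiR_in x))
                    (exist _ (ee y ⋅ j (bar y)) (psiL_in y)) = m).
    { apply Hinj. rewrite st_spec, Hm. simpl. reassoc. reflexivity. }
    f_equal; apply sig_eq; simpl; rewrite Sm.
    + rewrite B, E, (proj2 (psiL_factor x)), <- sassoc, j_aplus_mul. reflexivity.
    + rewrite B, F, (proj2 (psiR_factor y)), sassoc, j_mul_astar. reflexivity.
Qed.

Lemma decomposition_setting :
  construction_setting S0 Lsg Rsg iL iR barL eL fL barR eR fR st.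
Proof.
  exact (conj HA (conj Lsg_left_adequate (conj Rsg_right_adequate
    (conj iL_transversal (conj iL_quasi_ideal (conj iR_transversal (conj iR_quasi_ideal
    (conj Lsg_factor (conj Rsg_factor st_star_axioms))))))))).
Qed.

Lemma construction_complete : exists (S0' L R : semigroup) (iL : S0' -> L) (iR : S0' -> R)
  (barL : L -> S0') (eL fL : L -> L) (barR : R -> S0') (eR fR : R -> R) (st : R -> L -> S0'),
  construction_setting S0' L R iL iR barL eL fL barR eR fR st /\
  exists psi : S -> L * R, iso_onto S (inT S0' L R barL barR) (tmul S0' L R iL iR eL fR st) psi.
Proof.
  exists S0, Lsg, Rsg, iL, iR, barL, eL, fL, barR, eR, fR, st.
  split; [apply decomposition_setting|]. exists psi. apply psi_iso.
Qed.
End Decomposition.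

Theorem theorem2p8 :
  (forall (S0 L R : semigroup) (iL : S0 -> L) (iR : S0 -> R)
     (barL : L -> S0) (eL fL : L -> L) (barR : R -> S0) (eR fR : R -> R)
     (st : R -> L -> S0),
     construction_setting S0 L R iL iR barL eL fL barR eR fR st ->
     exists (T : semigroup) (phi : T -> L * R),
       iso_onto T (inT S0 L R barL barR) (tmul S0 L R iL iR eL fR st) phi /\
       abundant T /\
       exists j : S0 -> T,
         adequate_transversal j /\ quasi_ideal j /\
         forall s : S0, phi (j s) = (iL s, iR s))
  /\
  (forall (S S0 : semigroup) (j : S0 -> S),
     abundant S -> adequate_transversal j -> quasi_ideal j ->
     exists (S0' L R : semigroup) (iL : S0' -> L) (iR : S0' -> R)
       (barL : L -> S0') (eL fL : L -> L) (barR : R -> S0') (eR fR : R -> R)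
       (st : R -> L -> S0'),
       construction_setting S0' L R iL iR barL eL fL barR eR fR st /\
       exists psi : S -> L * R,
         iso_onto S (inT S0' L R barL barR) (tmul S0' L R iL iR eL fR st) psi).
Proof.
  split.
  - intros S0 L R iL iR barL eL fL barR eR fR st H.
    destruct H as (HA & HLad & HRad & HTL & HQL & HTR & HQR & HfL & HfR & HS).
    destruct HTL as (Lhom & Linj & _ & Lstar & Luniq).
    destruct HTR as (Rhom & Rinj & _ & Rstar & Runiq).
    destruct HS as (star1 & star2l & star2r).
    eapply construction_correct; eassumption.
  -
    intros S S0 j _ HT HQ. destruct HT as (Hhom & Hinj & HA & Hstar & Huniq).
    eapply construction_complete; eassumption.
Qed.
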